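(* Let $\psi$ be a phylogenetic network on a set of three taxa $\{A,B,C\}$, with one gene copy ($a$, $b$, $c$ respectively) sampled from each taxon. For every choice of branch lengths $\lambda$ and inheritance probabilities $\Gamma$, there is no gene tree topology $g$ on $\{a,b,c\}$ that is anomalous for $(\psi,\lambda,\Gamma)$; that is, there is no $g$ with $P_{\psi,\lambda,\Gamma}(G=g) > P_{\psi,\lambda,\Gamma}(G=t)$ for all $t\in\mathcal{W}(\psi)$. In other words, $\psi$ does not produce anomalies.
   Context: A phylogenetic network $\psi$ is a rooted directed acyclic graph with a unique root (in-degree 0, out-degree 2), in which every other node is either an internal tree node (in-degree 1, out-degree 2), a leaf (in-degree 1, out-degree 0, labeled by a taxon), or a reticulation node (in-degree 2, out-degree 1). It has branch lengths $\lambda$ (in coalescent units), and for each reticulation node $v$ with incoming edges $b_1,b_2$ it has inheritance probabilities $\gamma_{b_1},\gamma_{b_2}\ge 0$ with $\gamma_{b_1}+\gamma_{b_2}=1$; $\Gamma$ denotes all of these. Multispecies network coalescent: gene lineages are traced backward in time from the leaves; within each branch, every pair of lineages present coalesces independently at rate 1 per coalescent unit (Kingman coalescent), for the duration given by the branch length; when a lineage reaches a reticulation node $v$, it independently enters incoming edge $b$ with probability $\gamma_b$; above the root all remaining lineages coalesce (root branch of infinite length). $P_{\psi,\lambda,\Gamma}(G=g)$ denotes the resulting probability that the gene tree topology is $g$ (with gene copies identified with their taxa). MUL-tree of $\psi$: processing nodes from the leaves toward the root, for each reticulation node $h$ with parents $u,v$ and child $w$, make two copies of the subtree rooted at $w$,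 attach one as a child of $u$ and the other as a child of $v$, and delete $h$ and its incident edges. The result is a tree whose leaves may share taxon labels. Parental trees: $\mathcal{W}(\psi)$ is the set of tree topologies on $\{A,B,C\}$ obtained from the MUL-tree by retaining exactly one leaf labeled by each taxon, deleting the others, and repeatedly suppressing nodes of in-degree 1 and out-degree 1. A gene tree topology $g$ is anomalous for $(\psi,\lambda,\Gamma)$ if $P_{\psi,\lambda,\Gamma}(G=g)>P_{\psi,\lambda,\Gamma}(G=t)$ for all $t\in\mathcal{W}(\psi)$; $\psi$ produces anomalies if some $\lambda,\Gamma$ admit an anomalous gene tree. *)

From Stdlib Require Import Reals List Bool Arith.
Import ListNotations.
Open Scope R_scope.

Inductive taxon : Type := TA | TB | TC.

Definition taxon_eqb (x y : taxon) : bool :=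
  match x, y with
  | TA, TA | TB, TB | TC, TC => true
  | _, _ => false
  end.

Definition all_taxa : list taxon := [TA; TB; TC].

(** Used both for gene
    lineages (gene copies a,b,c identified with taxa A,B,C) and for the
    MUL-tree / parental trees.  Child order is irrelevant: topologies are
    compared through [outgroup]. *)
Inductive tree : Type :=
| Lf : taxon -> tree
| Nd : tree -> tree -> tree.

(** A rooted tree topology on three leaves is determined by its outgroup
    (the leaf not in the cherry).  We identify topologies on {A,B,C}
    (resp. {a,b,c}) with the outgroup taxon. *)
Definition outgroup (t : tree) : option taxon :=
  match t with
  | Nd (Nd (Lf _) (Lf _)) (Lf z) => Some z
  | Nd (Lf z) (Nd (Lf _) (Lf _)) => Some z
  | _ => None
  end.

(** Node kinds; nodes are numbered [0 .. nn-1], and each node stores its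
    children (out-neighbours). *)
Inductive nkind : Type :=
| NRoot : nat -> nat -> nkind
| NTree : nat -> nat -> nkind
| NLeaf : taxon -> nkind
| NRet  : nat -> nkind.

Record network : Type := mkNet { nn : nat; kind : nat -> nkind }.

(** Edges are identified by (parent, slot); slot [false]/[true] = first /
    second child.  This allows several edges between the same pair of nodes. *)
Definition edge : Type := (nat * bool)%type.

Definition out_edges (psi : network) (u : nat) : list edge :=
  match kind psi u with
  | NRoot _ _ | NTree _ _ => [(u, false); (u, true)]
  | NRet _ => [(u, false)]
  | NLeaf _ => []
  end.

Definition child (psi : network) (e : edge) : nat :=
  match kind psi (fst e) with
  | NRoot c1 c2 | NTree c1 c2 => if snd e then c2 else c1
  | NRet c => c
  | NLeaf _ => 0%nat
  end.

Definition all_edges (psi : network) : list edge :=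
  flat_map (out_edges psi) (seq 0 (nn psi)).

Definition inc (psi : network) (v : nat) : list edge :=
  filter (fun e => Nat.eqb (child psi e) v) (all_edges psi).

Definition is_root (k : nkind) : bool :=
  match k with NRoot _ _ => true | _ => false end.
Definition is_ret (k : nkind) : bool :=
  match k with NRet _ => true | _ => false end.

Definition indeg_req (k : nkind) : nat :=
  match k with NRoot _ _ => 0 | NRet _ => 2 | _ => 1 end%nat.

(** Well-formed phylogenetic network on the taxa {A,B,C}:
    - acyclic (children have smaller index: a topological numbering, which
      every finite DAG admits);
    - in-degrees as prescribed by the node kinds (out-degrees are built in);
    - a unique root;
    - leaves bijectively labelled by the taxa A, B, C. *)
Definition wf_network (psi : network) : Prop :=
  (forall u, (u < nn psi)%nat ->
     forall e, In e (out_edges psi u) -> (child psi e < u)%nat) /\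
  (forall v, (v < nn psi)%nat -> length (inc psi v) = indeg_req (kind psi v)) /\
  (exists r, (r < nn psi)%nat /\ is_root (kind psi r) = true /\
     forall u, (u < nn psi)%nat -> is_root (kind psi u) = true -> u = r) /\
  (forall x : taxon, exists l, (l < nn psi)%nat /\ kind psi l = NLeaf x /\
     forall u, (u < nn psi)%nat -> kind psi u = NLeaf x -> u = l).

(** Branch lengths (coalescent units) and inheritance probabilities, both
    indexed by edges. *)
Definition valid_lengths (psi : network) (lam : nat -> bool -> R) : Prop :=
  forall e, In e (all_edges psi) -> 0 < lam (fst e) (snd e).

Definition valid_gammas (psi : network) (gam : nat -> bool -> R) : Prop :=
  forall v, (v < nn psi)%nat -> is_ret (kind psi v) = true ->
    (forall e, In e (inc psi v) -> 0 <= gam (fst e) (snd e)) /\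
    fold_right Rplus 0 (map (fun e => gam (fst e) (snd e)) (inc psi v)) = 1.

Definition dist (X : Type) : Type := list (R * X).
Definition dret {X : Type} (x : X) : dist X := [(1, x)].
Definition dbind {X Y : Type} (d : dist X) (f : X -> dist Y) : dist Y :=
  flat_map (fun px => map (fun qy => (fst px * fst qy, snd qy)) (f (snd px))) d.

(** Kingman coalescent (rate 1 per pair) along a branch of length t, acting
    on the list of lineages present at the bottom of the branch; the result
    is the list of lineages at the top.  A lineage is represented by the
    gene subtree it carries.  Since only three gene copies are sampled, at
    most three lineages ever occur in a branch; the transition probabilities
    are the exact Kingman ones:
      2 lineages: no coalescence e^{-t};
      3 lineages: none e^{-3t}; exactly one, a given pair: (e^{-t}-e^{-3t})/2;
                  two coalescences, a given first pair: g31(t)/3 with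
                  g31(t) = 1 - e^{-3t} - 3/2 (e^{-t} - e^{-3t}).
    (Lists of length > 3 never occur; they are left unchanged.) *)
Definition coal (t : R) (L : list tree) : dist (list tree) :=
  match L with
  | [x; y] => [(exp (- t), [x; y]); (1 - exp (- t), [Nd x y])]
  | [x; y; z] =>
      let h := (exp (- t) - exp (- (3 * t))) / 2 in
      let q := (1 - exp (- (3 * t)) - 3 * h) / 3 in
      [(exp (- (3 * t)), [x; y; z]);
       (h, [Nd x y; z]); (h, [Nd x z; y]); (h, [Nd y z; x]);
       (q, [Nd (Nd x y) z]); (q, [Nd (Nd x z) y]); (q, [Nd (Nd y z) x])]
  | _ => dret L
  end.

(** Coalescence above the root (branch of infinite length): all lineages
    coalesce, each pair equally likely to be first. *)
Definition coal_inf (L : list tree) : dist tree :=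
  match L with
  | [x] => dret x
  | [x; y] => dret (Nd x y)
  | [x; y; z] =>
      [(1/3, Nd (Nd x y) z); (1/3, Nd (Nd x z) y); (1/3, Nd (Nd y z) x)]
  | _ => []
  end.

(** state: lineages at the bottom of every edge, and the final gene tree *)
Definition state : Type := ((nat -> bool -> list tree) * option tree)%type.

Definition upd (b : nat -> bool -> list tree) (e : edge) (x : tree)
  : nat -> bool -> list tree :=
  fun u s => if Nat.eqb u (fst e) && Bool.eqb s (snd e)
             then x :: b u s else b u s.

(** each lineage independently enters incoming edge e with weight w(e) *)
Fixpoint distribute (ws : list (edge * R)) (L : list tree)
    (b : nat -> bool -> list tree) : dist (nat -> bool -> list tree) :=
  match L with
  | [] => dret b
  | x :: L' =>
      dbind (distribute ws L' b)
        (fun b' => map (fun ew => (snd ew, upd b' (fst ew) x)) ws)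
  end.

(** process node c (all its children have already been processed) *)
Definition step (psi : network) (lam gam : nat -> bool -> R) (c : nat)
    (st : state) : dist state :=
  let b := fst st in
  let f := snd st in
  let Ld : dist (list tree) :=
    match kind psi c with
    | NLeaf x => dret [Lf x]
    | NRet _ => coal (lam c false) (b c false)
    | NTree _ _ | NRoot _ _ =>
        dbind (coal (lam c false) (b c false)) (fun L1 =>
        dbind (coal (lam c true) (b c true)) (fun L2 => dret (L1 ++ L2)))
    end in
  let ws : list (edge * R) :=
    map (fun e => (e, if is_ret (kind psi c) then gam (fst e) (snd e) else 1))
        (inc psi c) in
  dbind Ld (fun L =>
    if is_root (kind psi c)
    then map (fun pt => (fst pt, (b, Some (snd pt)))) (coal_inf L)
    else map (fun pb => (fst pb, (snd pb, f))) (distribute ws L b)).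

(** nodes processed in increasing index order, i.e. from the leaves up *)
Definition msnc_run (psi : network) (lam gam : nat -> bool -> R) : dist state :=
  fold_left (fun d c => dbind d (step psi lam gam c)) (seq 0 (nn psi))
            (dret ((fun _ _ => []), None)).

(** P_{psi,lambda,Gamma}(G = g), g a gene tree topology given by its outgroup *)
Definition gene_tree_prob (psi : network) (lam gam : nat -> bool -> R)
    (g : taxon) : R :=
  fold_right Rplus 0
    (map (fun ps =>
            match snd (snd ps) with
            | Some t =>
                match outgroup t with
                | Some z => if taxon_eqb z g then fst ps else 0
                | None => 0
                end
            | None => 0
            end)
         (msnc_run psi lam gam)).

(** Unfolding from node u: copying the subtree below each reticulation to
    both of its parents and deleting the reticulation. *)
Fixpoint mul_from (psi : network) (fuel : nat) (u : nat) : tree :=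
  match fuel with
  | O => Lf TA
  | S f =>
      match kind psi u with
      | NLeaf x => Lf x
      | NRet c => mul_from psi f c
      | NTree c1 c2 | NRoot c1 c2 => Nd (mul_from psi f c1) (mul_from psi f c2)
      end
  end.

(** MUL-tree of psi with root r (fuel nn suffices by acyclicity) *)
Definition mul_tree (psi : network) (r : nat) : tree := mul_from psi (nn psi) r.

Fixpoint label_at (t : tree) (p : list bool) : option taxon :=
  match t, p with
  | Lf x, [] => Some x
  | Nd l _, false :: p' => label_at l p'
  | Nd _ r, true :: p' => label_at r p'
  | _, _ => None
  end.

Fixpoint restrict (keep : list bool -> bool) (t : tree) : option tree :=
  match t with
  | Lf x => if keep [] then Some (Lf x) else None
  | Nd l r =>
      match restrict (fun p => keep (false :: p)) l,
            restrict (fun p => keep (true :: p)) r with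
      | Some a, Some b => Some (Nd a b)
      | Some a, None => Some a
      | None, Some b => Some b
      | None, None => None
      end
  end.

Fixpoint lbeq (p q : list bool) : bool :=
  match p, q with
  | [], [] => true
  | a :: p', b :: q' => Bool.eqb a b && lbeq p' q'
  | _, _ => false
  end.

(** t (an outgroup) is the topology of a parental tree in W(psi): retain
    exactly one leaf of the MUL-tree labelled by each taxon (sel x is the
    position of the retained x-leaf). *)
Definition parental (psi : network) (t : taxon) : Prop :=
  exists r, (r < nn psi)%nat /\ is_root (kind psi r) = true /\
  exists sel : taxon -> list bool,
    (forall x, label_at (mul_tree psi r) (sel x) = Some x) /\
    exists tr,
      restrict (fun p => existsb (fun x => lbeq p (sel x)) all_taxa)
               (mul_tree psi r) = Some tr /\
      outgroup tr = Some t.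

Definition anomalous (psi : network) (lam gam : nat -> bool -> R) (g : taxon)
  : Prop :=
  forall t, parental psi t -> gene_tree_prob psi lam gam g > gene_tree_prob psi lam gam t.

(* Fix distinct taxa x, y, z such that z is not the outgroup of any parental
   tree (topologies on three leaves are named by their outgroup).  We show
   P(G = z) <= P(G = x); since some parental tree exists, no non-parental g can
   then be anomalous, and a parental g trivially is not.

   A gene tree has outgroup x exactly when its cherry is {y,z}, so
   P(x) - P(z) is the expected "balance" #{y,z}-cherries - #{x,y}-cherries of
   the final gene tree.  Run the coalescent node by node from the leaves up and
   follow the expected total balance of the lineages in flight: it starts at 0
   and never decreases.  Three lineages in one branch form each cherry with the
   same probability, so they gain nothing on average; and the lineages x and y
   never share a branch without z, for otherwise retaining those three leaves
   of the MUL-tree would give a parental tree with outgroup z. *)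

From Pilot Require Import Defs.
From Stdlib Require Import Reals List Lra Lia Arith Bool Classical.
Import ListNotations.

Open Scope R_scope.

Definition expect {X : Type} (d : Defs.dist X) (g : X -> R) : R :=
  fold_right Rplus 0 (map (fun px => fst px * g (snd px)) d).

Definition mass {X : Type} (d : Defs.dist X) : R := expect d (fun _ => 1).

Lemma expect_app {X} (d1 d2 : Defs.dist X) g :
  expect (d1 ++ d2) g = expect d1 g + expect d2 g.
Proof. unfold expect; induction d1; simpl; [lra | rewrite IHd1; lra]. Qed.

Lemma expect_scale {X} (c : R) (d : Defs.dist X) g :
  expect (map (fun qy => (c * fst qy, snd qy)) d) g = c * expect d g.
Proof. unfold expect; induction d; simpl; [lra | rewrite IHd; simpl; lra]. Qed.

Lemma expect_dbind {X Y} (d : Defs.dist X) (f : X -> Defs.dist Y) g :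
  expect (dbind d f) g = expect d (fun x => expect (f x) g).
Proof.
  unfold dbind; induction d as [|[p x] d IH]; simpl; [reflexivity|].
  rewrite expect_app, expect_scale, IH. unfold expect at 3; simpl. reflexivity.
Qed.

Lemma expect_dret {X} (x : X) g : expect (dret x) g = g x.
Proof. unfold expect, dret; simpl; lra. Qed.

Lemma expect_map {X Y} (h : X -> Y) (d : Defs.dist X) g :
  expect (map (fun pb => (fst pb, h (snd pb))) d) g = expect d (fun x => g (h x)).
Proof. unfold expect; induction d; simpl; [lra | rewrite IHd; lra]. Qed.

Lemma expect_ext {X} (d : Defs.dist X) g g' :
  (forall px, In px d -> g (snd px) = g' (snd px)) -> expect d g = expect d g'.
Proof.
  unfold expect; induction d; simpl; intros H; [lra|].
  rewrite H, IHd by auto. lra.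
Qed.

Lemma expect_le {X} (d : Defs.dist X) g g' :
  (forall px, In px d -> 0 <= fst px /\ g (snd px) <= g' (snd px)) ->
  expect d g <= expect d g'.
Proof.
  unfold expect; induction d as [|a d IH]; simpl; intros H; [lra|].
  destruct (H a (or_introl eq_refl)) as [H1 H2].
  assert (fst a * g (snd a) <= fst a * g' (snd a)) by (apply Rmult_le_compat_l; auto).
  specialize (IH (fun px Hp => H px (or_intror Hp))). lra.
Qed.

Lemma expect_add {X} (d : Defs.dist X) g h :
  expect d (fun x => g x + h x) = expect d g + expect d h.
Proof. unfold expect; induction d; simpl; [lra | rewrite IHd; lra]. Qed.

Lemma expect_sub {X} (d : Defs.dist X) g h :
  expect d (fun x => g x - h x) = expect d g - expect d h.
Proof. unfold expect; induction d; simpl; [lra | rewrite IHd; lra]. Qed.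

Lemma expect_const {X} (d : Defs.dist X) g C :
  (forall px, In px d -> g (snd px) = C) -> expect d g = C * mass d.
Proof.
  unfold mass, expect; induction d; simpl; intros H; [lra|].
  rewrite H, IHd by auto. lra.
Qed.

Lemma expect_add_const {X} (d : Defs.dist X) C g :
  expect d (fun x => C + g x) = C * mass d + expect d g.
Proof. rewrite (expect_add d (fun _ => C) g). f_equal. now apply expect_const. Qed.

Lemma in_dbind {X Y} (d : Defs.dist X) (f : X -> Defs.dist Y) q :
  In q (dbind d f) ->
  exists px qy, In px d /\ In qy (f (snd px)) /\ q = (fst px * fst qy, snd qy).
Proof.
  unfold dbind. intros H. apply in_flat_map in H. destruct H as [px [H1 H2]].
  apply in_map_iff in H2. destruct H2 as [qy [H3 H4]]. exists px, qy; auto.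
Qed.

(** * The cherry balance under coalescence *)

Fixpoint occ (a : taxon) (T : tree) : nat :=
  match T with
  | Lf b => if taxon_eqb a b then 1%nat else 0%nat
  | Nd l r => (occ a l + occ a r)%nat
  end.

Definition occ_list (a : taxon) (L : list tree) : nat :=
  fold_right (fun T n => (occ a T + n)%nat) 0%nat L.

Lemma occ_list_app a L1 L2 : occ_list a (L1 ++ L2) = (occ_list a L1 + occ_list a L2)%nat.
Proof. induction L1; simpl; [auto|]. rewrite IHL1; lia. Qed.

Lemma taxon_eqb_spec a b : taxon_eqb a b = true <-> a = b.
Proof. destruct a, b; simpl; split; intros; congruence. Qed.

Lemma taxon_eqb_refl a : taxon_eqb a a = true.
Proof. destruct a; auto. Qed.

Lemma taxon_eqb_neq a b : a <> b -> taxon_eqb a b = false.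
Proof. destruct a, b; simpl; congruence. Qed.

Definition same_pair (a b c d : taxon) : bool :=
  (taxon_eqb a c && taxon_eqb b d) || (taxon_eqb a d && taxon_eqb b c).

(* Merging two lineages [l] and [r] scores [+1] if they form the cherry {y,z}
   (a gene tree with outgroup x) and [-1] if they form the cherry {x,y}. *)
Definition cherry_score (x y z : taxon) (l r : tree) : R :=
  match l, r with
  | Lf a, Lf b => if same_pair a b y z then 1 else if same_pair a b x y then -1 else 0
  | _, _ => 0
  end.

Fixpoint balance (x y z : taxon) (T : tree) : R :=
  match T with
  | Lf _ => 0
  | Nd l r => balance x y z l + balance x y z r + cherry_score x y z l r
  end.

Definition balance_list x y z (L : list tree) : R :=
  fold_right (fun T s => balance x y z T + s) 0 L.

Lemma balance_list_app x y z L1 L2 :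
  balance_list x y z (L1 ++ L2) = balance_list x y z L1 + balance_list x y z L2.
Proof.
  unfold balance_list; induction L1; simpl; [lra|]. rewrite IHL1; lra.
Qed.

(* Lineage lists whose coalescence cannot lower the expected balance. *)
Definition balance_safe x y z (L : list tree) : Prop :=
  (forall T1 T2, L = [T1; T2] -> 0 <= cherry_score x y z T1 T2) /\
  (forall T1 T2 T3, L = [T1; T2; T3] ->
     cherry_score x y z T1 T2 + cherry_score x y z T1 T3 + cherry_score x y z T2 T3 = 0).

Lemma exp_neg_triple t : exp (- (3 * t)) = exp (- t) * exp (- t) * exp (- t).
Proof. rewrite <- !exp_plus. f_equal. lra. Qed.

Lemma exp_neg_bounds t : 0 <= t -> 0 < exp (- t) <= 1.
Proof.
  intros Ht. split; [apply exp_pos|].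
  rewrite <- exp_0. destruct (Req_dec t 0) as [->|Ht0]; [rewrite Ropp_0; lra|].
  left. apply exp_increasing. lra.
Qed.

Lemma coal_weights_nonneg t L : 0 <= t -> forall px, In px (coal t L) -> 0 <= fst px.
Proof.
  intros Ht px H. destruct (exp_neg_bounds t Ht) as [u1 u2].
  set (u := exp (- t)) in *.
  destruct L as [|x1 [|x2 [|x3 [|x4 L]]]]; simpl in H;
    repeat (destruct H as [H|H]; [subst px; simpl; rewrite ?exp_neg_triple; fold u; try nra|]);
    try contradiction.
  all: replace ((1 - u * u * u - 3 * ((u - u * u * u) / 2)) / 3)
         with ((u - 1) * (u - 1) * (u + 2) / 6) by field;
       apply Rmult_le_pos; [|lra]; apply Rmult_le_pos; nra.
Qed.

Lemma coal_mass t L : mass (coal t L) = 1.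
Proof. destruct L as [|x1 [|x2 [|x3 [|x4 L]]]]; unfold mass, expect; simpl; lra. Qed.

Lemma coal_occ t L px : In px (coal t L) -> forall a, occ_list a (snd px) = occ_list a L.
Proof.
  destruct L as [|x1 [|x2 [|x3 [|x4 L]]]]; simpl; intros H a;
  repeat (destruct H as [H|H]; [subst px; simpl; lia|]); contradiction.
Qed.

Lemma coal_inf_weights_nonneg L px : In px (coal_inf L) -> 0 <= fst px.
Proof.
  destruct L as [|x1 [|x2 [|x3 [|x4 L]]]]; simpl; intros H;
  repeat (destruct H as [H|H]; [subst px; simpl; lra|]); contradiction.
Qed.

Lemma coal_inf_occ L px : In px (coal_inf L) -> forall a, occ a (snd px) = occ_list a L.
Proof.
  destruct L as [|x1 [|x2 [|x3 [|x4 L]]]]; simpl; intros H a;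
  repeat (destruct H as [H|H]; [subst px; simpl; lia|]); contradiction.
Qed.

Lemma coal_balance_le x y z t L : 0 <= t -> balance_safe x y z L ->
  balance_list x y z L <= expect (coal t L) (balance_list x y z).
Proof.
  intros Ht [H2 H3]. destruct (exp_neg_bounds t Ht) as [u1 u2].
  destruct L as [|x1 [|x2 [|x3 [|x4 L]]]]; unfold expect; simpl; try lra.
  - specialize (H2 x1 x2 eq_refl). nra.
  - specialize (H3 x1 x2 x3 eq_refl). rewrite exp_neg_triple. set (u := exp (- t)) in *.
    change (cherry_score x y z (Nd x1 x2) x3) with 0.
    change (cherry_score x y z (Nd x1 x3) x2) with 0.
    change (cherry_score x y z (Nd x2 x3) x1) with 0.
    unfold Rdiv. nra.
Qed.

Lemma coal_inf_balance_le x y z L : (1 <= length L <= 3)%nat -> balance_safe x y z L ->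
  balance_list x y z L <= expect (coal_inf L) (balance x y z).
Proof.
  intros Hl [H2 H3].
  destruct L as [|x1 [|x2 [|x3 [|x4 L]]]]; simpl in Hl; try lia; unfold expect; simpl; try lra.
  - specialize (H2 x1 x2 eq_refl). lra.
  - specialize (H3 x1 x2 x3 eq_refl).
    change (cherry_score x y z (Nd x1 x2) x3) with 0.
    change (cherry_score x y z (Nd x1 x3) x2) with 0.
    change (cherry_score x y z (Nd x2 x3) x1) with 0.
    lra.
Qed.

Definition coal_pair (t1 t2 : R) (L1 L2 : list tree) : Defs.dist (list tree) :=
  dbind (coal t1 L1) (fun M1 => dbind (coal t2 L2) (fun M2 => dret (M1 ++ M2))).

Lemma in_coal_pair t1 t2 L1 L2 px : 0 <= t1 -> 0 <= t2 -> In px (coal_pair t1 t2 L1 L2) ->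
  0 <= fst px /\ forall a, occ_list a (snd px) = (occ_list a L1 + occ_list a L2)%nat.
Proof.
  intros H1 H2 Hp. apply in_dbind in Hp. destruct Hp as [p1 [q [Hp1 [Hq ->]]]].
  apply in_dbind in Hq. destruct Hq as [p2 [r [Hp2 [[<-|[]] ->]]]]. simpl.
  pose proof (coal_weights_nonneg _ _ H1 _ Hp1). pose proof (coal_weights_nonneg _ _ H2 _ Hp2).
  split; [repeat apply Rmult_le_pos; lra|]. intros a.
  now rewrite occ_list_app, (coal_occ _ _ _ Hp1), (coal_occ _ _ _ Hp2).
Qed.

Lemma coal_pair_mass t1 t2 L1 L2 : mass (coal_pair t1 t2 L1 L2) = 1.
Proof.
  unfold coal_pair, mass. rewrite expect_dbind.
  transitivity (mass (coal t1 L1)); [|apply coal_mass]. apply expect_ext. intros p1 _.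
  rewrite expect_dbind. transitivity (mass (coal t2 L2)); [|apply coal_mass].
  apply expect_ext. intros; apply (expect_dret (snd p1 ++ _) (fun _ => 1)).
Qed.

Lemma coal_pair_balance_le x y z t1 t2 L1 L2 : 0 <= t1 -> 0 <= t2 ->
  balance_safe x y z L1 -> balance_safe x y z L2 ->
  balance_list x y z L1 + balance_list x y z L2
  <= expect (coal_pair t1 t2 L1 L2) (balance_list x y z).
Proof.
  intros H1 H2 C1 C2. unfold coal_pair. rewrite expect_dbind.
  transitivity (expect (coal t1 L1) (fun M1 => balance_list x y z M1 + balance_list x y z L2)).
  - rewrite expect_add, (expect_const _ (fun _ => balance_list x y z L2) (balance_list x y z L2)),
      coal_mass by auto.
    pose proof (coal_balance_le x y z t1 L1 H1 C1). lra.
  - apply expect_le. intros p1 Hp1. split; [exact (coal_weights_nonneg t1 L1 H1 p1 Hp1)|].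
    rewrite expect_dbind.
    transitivity (expect (coal t2 L2)
                    (fun M2 => balance_list x y z (snd p1) + balance_list x y z M2)).
    + rewrite expect_add_const, coal_mass. pose proof (coal_balance_le x y z t2 L2 H2 C2). lra.
    + apply Req_le, expect_ext. intros; rewrite expect_dret, balance_list_app; auto.
Qed.

Definition leaves (T : tree) : nat := (occ TA T + occ TB T + occ TC T)%nat.

Lemma leaves_Nd l r : leaves (Nd l r) = (leaves l + leaves r)%nat.
Proof. unfold leaves; simpl; lia. Qed.

Lemma leaves_pos T : (1 <= leaves T)%nat.
Proof. induction T as [[]|]; [cbv; lia .. | rewrite leaves_Nd; lia]. Qed.

Lemma leaves_1 T : leaves T = 1%nat -> exists a, T = Lf a.
Proof.
  destruct T; eauto. rewrite leaves_Nd. pose proof (leaves_pos T1); pose proof (leaves_pos T2); lia.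
Qed.

Lemma leaves_2 T : leaves T = 2%nat -> exists a b, T = Nd (Lf a) (Lf b).
Proof.
  destruct T as [[]|T1 T2]; [cbv; lia .. |].
  rewrite leaves_Nd. pose proof (leaves_pos T1); pose proof (leaves_pos T2). intros Hs.
  destruct (leaves_1 T1 ltac:(lia)) as [a ->]. destruct (leaves_1 T2 ltac:(lia)) as [b ->]. eauto.
Qed.

Lemma three_distinct_leaves T1 T2 T3 : (forall a, (occ_list a [T1; T2; T3] <= 1)%nat) ->
  exists a1 a2 a3, T1 = Lf a1 /\ T2 = Lf a2 /\ T3 = Lf a3 /\ a1 <> a2 /\ a1 <> a3 /\ a2 <> a3.
Proof.
  intros H. pose proof (H TA); pose proof (H TB); pose proof (H TC).
  unfold occ_list in *; simpl in *.
  pose proof (leaves_pos T1); pose proof (leaves_pos T2); pose proof (leaves_pos T3).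
  unfold leaves in *.
  destruct (leaves_1 T1 ltac:(unfold leaves; lia)) as [a1 ->].
  destruct (leaves_1 T2 ltac:(unfold leaves; lia)) as [a2 ->].
  destruct (leaves_1 T3 ltac:(unfold leaves; lia)) as [a3 ->].
  destruct a1, a2, a3; simpl in *; try lia; eexists _, _, _; repeat split; discriminate.
Qed.

Lemma cherry_score_three_sum x y z a1 a2 a3 :
  x <> y -> x <> z -> y <> z -> a1 <> a2 -> a1 <> a3 -> a2 <> a3 ->
  cherry_score x y z (Lf a1) (Lf a2) + cherry_score x y z (Lf a1) (Lf a3)
  + cherry_score x y z (Lf a2) (Lf a3) = 0.
Proof.
  intros; destruct x, y, z; try congruence; destruct a1, a2, a3; try congruence;
  unfold cherry_score, same_pair; simpl; lra.
Qed.

Lemma cherry_score_nonneg_or x y z T1 T2 : x <> y -> x <> z -> y <> z ->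
  0 <= cherry_score x y z T1 T2 \/ (T1 = Lf x /\ T2 = Lf y) \/ (T1 = Lf y /\ T2 = Lf x).
Proof.
  intros. destruct T1 as [a|]; [|left; simpl; lra]. destruct T2 as [b|]; [|left; simpl; lra].
  destruct x, y, z; try congruence; destruct a, b; unfold cherry_score, same_pair; simpl;
  auto; left; lra.
Qed.

Lemma balance_safe_three x y z T1 T2 T3 : x <> y -> x <> z -> y <> z ->
  (forall a, (occ_list a [T1; T2; T3] <= 1)%nat) ->
  cherry_score x y z T1 T2 + cherry_score x y z T1 T3 + cherry_score x y z T2 T3 = 0.
Proof.
  intros Dxy Dxz Dyz H.
  destruct (three_distinct_leaves T1 T2 T3 H) as [a1 [a2 [a3 [-> [-> [-> [? [? ?]]]]]]]].
  now apply cherry_score_three_sum.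
Qed.

Definition outgroup_is (g : taxon) (T : tree) : R :=
  match outgroup T with Some o => if taxon_eqb o g then 1 else 0 | None => 0 end.

Lemma balance_complete_tree x y z T : x <> y -> x <> z -> y <> z ->
  (forall a, occ a T = 1%nat) -> balance x y z T = outgroup_is x T - outgroup_is z T.
Proof.
  intros Dxy Dxz Dyz H.
  assert (L3 : leaves T = 3%nat) by (unfold leaves; rewrite !H; auto).
  destruct T as [a|l r]; [unfold leaves in L3; destruct a; simpl in L3; lia|].
  rewrite leaves_Nd in L3. pose proof (leaves_pos l); pose proof (leaves_pos r).
  pose proof (H TA); pose proof (H TB); pose proof (H TC).
  assert (leaves l = 1%nat \/ leaves l = 2%nat) as [Hl|Hl] by lia.
  - destruct (leaves_1 l Hl) as [a ->]. destruct (leaves_2 r ltac:(lia)) as [b [c ->]].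
    simpl in *. destruct x, y, z; try congruence; destruct a, b, c; simpl in *; try lia;
    unfold outgroup_is, cherry_score, same_pair; simpl; lra.
  - destruct (leaves_2 l Hl) as [a [b ->]]. destruct (leaves_1 r ltac:(lia)) as [c ->].
    simpl in *. destruct x, y, z; try congruence; destruct a, b, c; simpl in *; try lia;
    unfold outgroup_is, cherry_score, same_pair; simpl; lra.
Qed.

Lemma root_lineages_safe x y z L : x <> y -> x <> z -> y <> z ->
  (forall a, occ_list a L = 1%nat) -> (1 <= length L <= 3)%nat /\ balance_safe x y z L.
Proof.
  intros Dxy Dxz Dyz H.
  assert (Ls : fold_right (fun T n => (leaves T + n)%nat) 0%nat L = 3%nat).
  { transitivity (occ_list TA L + occ_list TB L + occ_list TC L)%nat; [|rewrite !H; auto].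
    clear. unfold occ_list, leaves. induction L; simpl; lia. }
  split; [|split].
  - assert (LL : (length L <= fold_right (fun T n => (leaves T + n)%nat) 0%nat L)%nat).
    { clear. induction L; simpl; auto. pose proof (leaves_pos a); lia. }
    destruct L; [specialize (H TA); simpl in H; lia|]. simpl in *; lia.
  - intros T1 T2 ->.
    destruct (cherry_score_nonneg_or x y z T1 T2 Dxy Dxz Dyz) as [?|[[-> ->]|[-> ->]]]; auto;
    specialize (H z); unfold occ_list in H; simpl in H;
    rewrite !taxon_eqb_neq in H by congruence; simpl in H; lia.
  - intros T1 T2 T3 ->. apply balance_safe_three; auto. intros a; rewrite H; auto.
Qed.

Close Scope R_scope.

(** * Restricting a tree to selected leaves *)

Lemma restrict_none keep T :
  (forall p, keep p = true -> label_at T p = None) -> restrict keep T = None.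
Proof.
  revert keep; induction T as [a|l IHl r IHr]; intros keep H; simpl.
  - destruct (keep []) eqn:K; auto. specialize (H [] K). discriminate.
  - rewrite IHl, IHr; auto; intros p Hp; [exact (H (true :: p) Hp) | exact (H (false :: p) Hp)].
Qed.

Definition kept_in (keep : list bool -> bool) (T : tree) (P : list bool -> Prop) : Prop :=
  forall p, keep p = true -> label_at T p <> None -> P p.

Lemma kept_in_child keep l r (b : bool) P :
  kept_in keep (Nd l r) P ->
  kept_in (fun p => keep (b :: p)) (if b then r else l) (fun p => P (b :: p)).
Proof. intros H p Kp Lp. apply H; auto. destruct b; auto. Qed.

Lemma restrict_empty_side keep l r (b : bool) P :
  kept_in keep (Nd l r) P -> (forall p, ~ P (b :: p)) ->
  restrict (fun p => keep (b :: p)) (if b then r else l) = None.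
Proof.
  intros H NP. apply restrict_none. intros p Kp.
  destruct (label_at (if b then r else l) p) eqn:Lp; auto. exfalso.
  apply (NP p), H; auto. destruct b; simpl; rewrite Lp; discriminate.
Qed.

Lemma restrict_one keep T p0 w :
  keep p0 = true -> label_at T p0 = Some w -> kept_in keep T (eq p0) ->
  restrict keep T = Some (Lf w).
Proof.
  revert keep p0; induction T as [a|l IHl r IHr]; intros keep p0 K L H; simpl.
  - destruct p0; simpl in L; [|discriminate]. inversion L; subst. rewrite K; auto.
  - destruct p0 as [|b p0]; simpl in L; [discriminate|].
    pose proof (restrict_empty_side keep l r (negb b) _ H) as N.
    destruct b; simpl in N; rewrite N by discriminate;
      [rewrite (IHr _ p0) | rewrite (IHl _ p0)]; auto;
    intros p Kp Lp; specialize (kept_in_child _ _ _ _ _ H p Kp Lp); congruence.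
Qed.

Lemma kept_in_weaken keep T (P P' : list bool -> Prop) :
  kept_in keep T P -> (forall p, P p -> P' p) -> kept_in keep T P'.
Proof. intros H HP p Kp Lp. auto. Qed.

Ltac kept_side H b :=
  apply (kept_in_weaken _ _ _ _ (kept_in_child _ _ _ b _ H));
  intros ?p Hp; repeat destruct Hp as [Hp|Hp]; inversion Hp; subst; auto.

Lemma restrict_two keep T p1 p2 w1 w2 :
  p1 <> p2 -> keep p1 = true -> keep p2 = true ->
  label_at T p1 = Some w1 -> label_at T p2 = Some w2 ->
  kept_in keep T (fun p => p = p1 \/ p = p2) ->
  exists a b, restrict keep T = Some (Nd (Lf a) (Lf b)).
Proof.
  revert keep p1 p2; induction T as [a|l IHl r IHr]; intros keep p1 p2 D K1 K2 L1 L2 H; simpl.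
  { destruct p1, p2; simpl in *; congruence. }
  destruct p1 as [|[] p1], p2 as [|[] p2]; simpl in L1, L2; try discriminate.
  - pose proof (restrict_empty_side keep l r false _ H) as N; simpl in N.
    rewrite N by (intros ? [E|E]; discriminate).
    destruct (IHr (fun p => keep (true :: p)) p1 p2) as [a [b E]]; auto;
      [congruence | kept_side H true |].
    rewrite E; eauto.
  - rewrite (restrict_one _ l p2 w2), (restrict_one _ r p1 w1); eauto;
      [kept_side H true | kept_side H false].
  - rewrite (restrict_one _ l p1 w1), (restrict_one _ r p2 w2); eauto;
      [kept_side H true | kept_side H false].
  - pose proof (restrict_empty_side keep l r true _ H) as N; simpl in N.
    rewrite N by (intros ? [E|E]; discriminate).
    destruct (IHl (fun p => keep (false :: p)) p1 p2) as [a [b E]]; auto;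
      [congruence | kept_side H false |].
    rewrite E; eauto.
Qed.

Lemma restrict_Nd_empty_side keep l r (b : bool) P :
  kept_in keep (Nd l r) P -> (forall p, ~ P (negb b :: p)) ->
  restrict keep (Nd l r) = restrict (fun p => keep (b :: p)) (if b then r else l).
Proof.
  intros H NP. pose proof (restrict_empty_side keep l r (negb b) P H NP) as N.
  destruct b; simpl in *; rewrite N;
    [destruct (restrict _ r) | destruct (restrict _ l)]; reflexivity.
Qed.

Ltac finish_split :=
  eexists; split;
    [reflexivity | split; [eexists; reflexivity | intros E; (reflexivity || discriminate E)]].

Lemma restrict_three_split keep l r (b1 b2 b3 : bool) q1 q2 q3 w1 w2 w3 :
  ~ (b1 = b2 /\ b1 = b3) -> b1 :: q1 <> b2 :: q2 -> b1 :: q1 <> b3 :: q3 -> b2 :: q2 <> b3 :: q3 ->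
  keep (b1 :: q1) = true -> keep (b2 :: q2) = true -> keep (b3 :: q3) = true ->
  label_at (Nd l r) (b1 :: q1) = Some w1 -> label_at (Nd l r) (b2 :: q2) = Some w2 ->
  label_at (Nd l r) (b3 :: q3) = Some w3 ->
  kept_in keep (Nd l r) (fun p => p = b1 :: q1 \/ p = b2 :: q2 \/ p = b3 :: q3) ->
  exists tr, restrict keep (Nd l r) = Some tr /\ (exists o, outgroup tr = Some o) /\
    (b1 = b2 -> outgroup tr = Some w3).
Proof.
  intros NE D12 D13 D23 K1 K2 K3 L1 L2 L3 H; simpl.
  destruct b1, b2, b3; simpl in L1, L2, L3; try tauto.
  - rewrite (restrict_one _ l q3 w3) by (auto; kept_side H false).
    destruct (restrict_two (fun p => keep (true :: p)) r q1 q2 w1 w2) as [a [b ->]];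
      auto; [congruence | kept_side H true | finish_split].
  - rewrite (restrict_one _ l q2 w2) by (auto; kept_side H false).
    destruct (restrict_two (fun p => keep (true :: p)) r q1 q3 w1 w3) as [a [b ->]];
      auto; [congruence | kept_side H true | finish_split].
  - rewrite (restrict_one _ r q1 w1) by (auto; kept_side H true).
    destruct (restrict_two (fun p => keep (false :: p)) l q2 q3 w2 w3) as [a [b ->]];
      auto; [congruence | kept_side H false | finish_split].
  - rewrite (restrict_one _ l q1 w1) by (auto; kept_side H false).
    destruct (restrict_two (fun p => keep (true :: p)) r q2 q3 w2 w3) as [a [b ->]];
      auto; [congruence | kept_side H true | finish_split].
  - rewrite (restrict_one _ r q2 w2) by (auto; kept_side H true).
    destruct (restrict_two (fun p => keep (false :: p)) l q1 q3 w1 w3) as [a [b ->]];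
      auto; [congruence | kept_side H false | finish_split].
  - rewrite (restrict_one _ r q3 w3) by (auto; kept_side H true).
    destruct (restrict_two (fun p => keep (false :: p)) l q1 q2 w1 w2) as [a [b ->]];
      auto; [congruence | kept_side H false | finish_split].
Qed.

(* [prefix Q p]: the leaf at position [p] lies in the subtree at position [Q]. *)
Definition prefix (Q P : list bool) : Prop := exists R, P = Q ++ R.

Lemma prefix_nil P : prefix [] P.
Proof. exists P; reflexivity. Qed.

Lemma prefix_diverge Q (b1 b2 : bool) P1 P2 :
  b1 <> b2 -> prefix Q (b1 :: P1) -> prefix Q (b2 :: P2) -> Q = [].
Proof.
  intros D [R1 E1] [R2 E2]. destruct Q as [|c Q]; auto.
  inversion E1; inversion E2; subst. congruence.
Qed.

Lemma prefix_cons_inv Q (b : bool) P1 P2 P3 :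
  prefix Q (b :: P1) -> prefix Q (b :: P2) -> ~ prefix Q (b :: P3) ->
  exists Q', prefix Q' P1 /\ prefix Q' P2 /\ ~ prefix Q' P3.
Proof.
  intros [R1 E1] [R2 E2] N. destruct Q as [|c Q]; [exfalso; apply N, prefix_nil|].
  inversion E1; inversion E2; subst. exists Q.
  split; [eexists; eauto | split; [eexists; eauto|]].
  intros [R3 E3]. apply N. exists R3. simpl. now rewrite E3.
Qed.

Lemma restrict_three keep T p1 p2 p3 w1 w2 w3 :
  p1 <> p2 -> p1 <> p3 -> p2 <> p3 -> keep p1 = true -> keep p2 = true -> keep p3 = true ->
  label_at T p1 = Some w1 -> label_at T p2 = Some w2 -> label_at T p3 = Some w3 ->
  kept_in keep T (fun p => p = p1 \/ p = p2 \/ p = p3) ->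
  exists tr, restrict keep T = Some tr /\ (exists o, outgroup tr = Some o) /\
    (forall Q, prefix Q p1 -> prefix Q p2 -> ~ prefix Q p3 -> outgroup tr = Some w3).
Proof.
  revert keep p1 p2 p3; induction T as [a|l IHl r IHr];
    intros keep p1 p2 p3 D12 D13 D23 K1 K2 K3 L1 L2 L3 H.
  { destruct p1, p2; simpl in *; congruence. }
  destruct p1 as [|b1 q1], p2 as [|b2 q2], p3 as [|b3 q3]; try discriminate.
  destruct (bool_dec b1 b2) as [<-|N12]; [destruct (bool_dec b1 b3) as [<-|N13]|].
  - rewrite (restrict_Nd_empty_side keep l r b1 _ H)
      by (intros p Hp; destruct b1; repeat destruct Hp as [Hp|Hp]; discriminate).
    assert (Hs : kept_in (fun p => keep (b1 :: p)) (if b1 then r else l)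
                   (fun p => p = q1 \/ p = q2 \/ p = q3)) by kept_side H b1.
    destruct b1; simpl in L1, L2, L3 |- *;
      [ destruct (IHr (fun p => keep (true :: p)) q1 q2 q3) as [tr [E [Ho HQ]]]
      | destruct (IHl (fun p => keep (false :: p)) q1 q2 q3) as [tr [E [Ho HQ]]] ];
      try congruence; auto; rewrite E; exists tr; (split; [reflexivity | split; auto]);
      intros Q Q1 Q2 Q3; destruct (prefix_cons_inv Q _ q1 q2 q3 Q1 Q2 Q3) as [Q' [? [? ?]]];
      eauto.
  - destruct (restrict_three_split keep l r b1 b1 b3 q1 q2 q3 w1 w2 w3) as [tr [E [Ho Hb]]];
      auto; [tauto|]. exists tr; auto.
  - destruct (restrict_three_split keep l r b1 b2 b3 q1 q2 q3 w1 w2 w3) as [tr [E [Ho _]]];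
      auto; [tauto|]. exists tr; split; [|split]; auto.
    intros Q Q1 Q2 Q3. exfalso. apply Q3. rewrite (prefix_diverge Q b1 b2 q1 q2); auto.
    apply prefix_nil.
Qed.

(** * Unfolding the network *)

Definition acyclic psi :=
  forall u, u < nn psi -> forall e, In e (out_edges psi u) -> child psi e < u.

Lemma acyclic_tree psi u c1 c2 : acyclic psi -> u < nn psi ->
  (kind psi u = NTree c1 c2 \/ kind psi u = NRoot c1 c2) -> c1 < u /\ c2 < u.
Proof.
  intros A Hu Hk. assert (O : out_edges psi u = [(u,false);(u,true)])
    by (unfold out_edges; destruct Hk as [Hk|Hk]; rewrite Hk; auto).
  pose proof (A u Hu (u,false)) as H1. pose proof (A u Hu (u,true)) as H2.
  rewrite O in H1, H2. unfold child in H1, H2; simpl in H1, H2.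
  destruct Hk as [Hk|Hk]; rewrite Hk in H1, H2;
    split; [apply H1|apply H2|apply H1|apply H2]; simpl; auto.
Qed.

Lemma acyclic_ret psi u c : acyclic psi -> u < nn psi -> kind psi u = NRet c -> c < u.
Proof.
  intros A Hu Hk. pose proof (A u Hu (u,false)) as H1.
  unfold out_edges, child in H1; rewrite Hk in H1.
  simpl in H1. rewrite Hk in H1. apply H1; simpl; auto.
Qed.

(* Fuel [v + 1] suffices because children have smaller indices. *)
Definition mul_at psi v := mul_from psi (S v) v.

Lemma mul_from_fuel psi : acyclic psi ->
  forall v, v < nn psi -> forall f, v < f -> mul_from psi f v = mul_at psi v.
Proof.
  intros A. induction v as [v IH] using lt_wf_ind. intros Hv f Hf.
  unfold mul_at. destruct f as [|f]; [lia|]. simpl.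
  assert (E1: forall c, c < v -> mul_from psi f c = mul_from psi v c)
    by (intros c Hc; rewrite (IH c Hc ltac:(lia) f ltac:(lia)), (IH c Hc ltac:(lia) v Hc); auto).
  destruct (kind psi v) eqn:Hk; auto.
  - destruct (acyclic_tree psi v n n0 A Hv (or_intror Hk)). rewrite !E1; auto.
  - destruct (acyclic_tree psi v n n0 A Hv (or_introl Hk)). rewrite !E1; auto.
  - pose proof (acyclic_ret psi v n A Hv Hk). rewrite !E1; auto.
Qed.

Lemma mul_at_unfold psi v : acyclic psi -> v < nn psi ->
  mul_at psi v = match kind psi v with
            | NLeaf x => Lf x
            | NRet c => mul_at psi c
            | NTree c1 c2 | NRoot c1 c2 => Nd (mul_at psi c1) (mul_at psi c2) end.
Proof.
  intros A Hv. unfold mul_at at 1. simpl. destruct (kind psi v) eqn:Hk; auto.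
  - destruct (acyclic_tree psi v n n0 A Hv (or_intror Hk)). rewrite !mul_from_fuel; auto; lia.
  - destruct (acyclic_tree psi v n n0 A Hv (or_introl Hk)). rewrite !mul_from_fuel; auto; lia.
  - pose proof (acyclic_ret psi v n A Hv Hk). rewrite !mul_from_fuel; auto; lia.
Qed.

(* [reaches psi v p w]: position [p] of the MUL-tree unfolded from [v] is a copy
   of node [w]. *)
Inductive reaches (psi : network) : nat -> list bool -> nat -> Prop :=
| reaches_nil (v : nat) : reaches psi v [] v
| reaches_tree (v c1 c2 : nat) (b : bool) (p : list bool) (w : nat) :
    (kind psi v = NTree c1 c2 \/ kind psi v = NRoot c1 c2) ->
    reaches psi (if b then c2 else c1) p w -> reaches psi v (b :: p) w
| reaches_ret (v c : nat) (p : list bool) (w : nat) :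
    kind psi v = NRet c -> reaches psi c p w -> reaches psi v p w.

Lemma reaches_le psi v p w : acyclic psi -> reaches psi v p w -> v < nn psi -> w <= v.
Proof.
  intros A H; induction H; intros Hv; auto.
  - destruct (acyclic_tree psi v c1 c2 A Hv H). destruct b; specialize (IHreaches ltac:(lia)); lia.
  - pose proof (acyclic_ret psi v c A Hv H). specialize (IHreaches ltac:(lia)); lia.
Qed.

Lemma reaches_app psi v p u q w :
  reaches psi v p u -> reaches psi u q w -> reaches psi v (p ++ q) w.
Proof.
  intros H1 H2; induction H1; simpl; auto.
  - eapply reaches_tree; eauto.
  - eapply reaches_ret; eauto.
Qed.

Lemma label_at_reaches psi v p w : acyclic psi -> reaches psi v p w -> v < nn psi ->
  forall q, label_at (mul_at psi v) (p ++ q) = label_at (mul_at psi w) q.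
Proof.
  intros A H; induction H; intros Hv q; simpl; auto.
  - rewrite mul_at_unfold by auto. destruct H as [Hk|Hk]; rewrite Hk;
    destruct (acyclic_tree psi v c1 c2 A Hv (ltac:(rewrite Hk; auto))).
    all: destruct b; simpl; apply IHreaches; lia.
  - rewrite mul_at_unfold by auto. rewrite H. apply IHreaches.
    pose proof (acyclic_ret psi v c A Hv H); lia.
Qed.

Fixpoint visited psi (f : nat) (v : nat) (p : list bool) : list nat :=
  match f with
  | 0 => [v]
  | S f' => v :: match kind psi v, p with
                 | NRet c, _ => visited psi f' c p
                 | NTree c1 c2, b :: p' | NRoot c1 c2, b :: p' =>
                     visited psi f' (if b then c2 else c1) p'
                 | _, _ => [] end
  end.

Lemma visited_le psi f v p w : acyclic psi -> v < nn psi -> In w (visited psi f v p) -> w <= v.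
Proof.
  intros A. revert v p; induction f; intros v p Hv H; simpl in H.
  - destruct H as [H|[]]; lia.
  - destruct H as [H|H]; [lia|].
    destruct (kind psi v) eqn:Hk.
    + destruct p as [|b p]; [destruct H|].
      destruct (acyclic_tree psi v n n0 A Hv (or_intror Hk)).
      destruct b; apply IHf in H; lia.
    + destruct p as [|b p]; [destruct H|].
      destruct (acyclic_tree psi v n n0 A Hv (or_introl Hk)).
      destruct b; apply IHf in H; lia.
    + destruct H.
    + pose proof (acyclic_ret psi v n A Hv Hk). apply IHf in H; lia.
Qed.

Lemma visited_app psi f v P R w : In w (visited psi f v P) -> In w (visited psi f v (P ++ R)).
Proof.
  revert v P; induction f; intros v P H; simpl in *; auto.
  destruct H as [H|H]; auto. right.
  destruct (kind psi v); destruct P; simpl in *; try contradiction; auto;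
  apply (IHf _ _ H).
Qed.

Lemma reaches_visited psi v p w f : acyclic psi -> reaches psi v p w -> v < nn psi -> v < f ->
  In w (visited psi f v p).
Proof.
  intros A H; revert f; induction H; intros f Hv Hf; destruct f as [|f]; try lia; simpl; auto.
  - right. destruct (acyclic_tree psi v c1 c2 A Hv H).
    destruct H as [Hk|Hk]; rewrite Hk; apply IHreaches; destruct b; lia.
  - right. pose proof (acyclic_ret psi v c A Hv H). rewrite H. apply IHreaches; lia.
Qed.

Lemma visited_split psi v p u t w f : acyclic psi -> reaches psi v p u -> v < nn psi ->
  In w (visited psi f v (p ++ t)) -> u <= w \/ exists f', In w (visited psi f' u t).
Proof.
  intros A H; revert f; induction H; intros f Hv Hin; simpl in *; eauto.
  - destruct f as [|f]; simpl in Hin.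
    + destruct Hin as [<-|[]]. left. eapply reaches_le; eauto. eapply reaches_tree; eauto.
    + destruct Hin as [<-|Hin]. left. eapply reaches_le; eauto. eapply reaches_tree; eauto.
      destruct (acyclic_tree psi v c1 c2 A Hv H).
      destruct H as [Hk|Hk]; rewrite Hk in Hin; eapply IHreaches; eauto; destruct b; lia.
  - destruct f as [|f]; simpl in Hin.
    + destruct Hin as [<-|[]]. left. eapply reaches_le; eauto. eapply reaches_ret; eauto.
    + destruct Hin as [<-|Hin]. left. eapply reaches_le; eauto. eapply reaches_ret; eauto.
      pose proof (acyclic_ret psi v c A Hv H). rewrite H in Hin. eapply IHreaches; eauto; lia.
Qed.

Lemma wf_acyclic psi : wf_network psi -> acyclic psi.
Proof. intros [A _]. exact A. Qed.

Lemma in_all_edges psi e : In e (all_edges psi) <-> exists u, u < nn psi /\ In e (out_edges psi u).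
Proof.
  unfold all_edges. rewrite in_flat_map. split; intros [u [H1 H2]]; exists u; split; auto.
  - apply in_seq in H1; lia.
  - apply in_seq; lia.
Qed.

Lemma out_edges_fst psi u e : In e (out_edges psi u) -> fst e = u.
Proof.
  unfold out_edges; destruct (kind psi u); simpl; intros H;
  repeat (destruct H as [H|H]; [subst; auto|]); contradiction.
Qed.

Definition edge_pos psi (e : edge) : list bool :=
  match kind psi (fst e) with NRet _ => [] | _ => [snd e] end.

Lemma reaches_edge psi u e : In e (out_edges psi u) -> reaches psi u (edge_pos psi e) (child psi e).
Proof.
  intros H. pose proof (out_edges_fst psi u e H) as F. unfold edge_pos, child. rewrite F.
  unfold out_edges in H. destruct (kind psi u) eqn:Hk; simpl in H;
  repeat (destruct H as [H|H]; [subst e; simpl|]); try contradiction.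
  - eapply reaches_tree with (b := false); [right; eauto|]. apply reaches_nil.
  - eapply reaches_tree with (b := true); [right; eauto|]. apply reaches_nil.
  - eapply reaches_tree with (b := false); [left; eauto|]. apply reaches_nil.
  - eapply reaches_tree with (b := true); [left; eauto|]. apply reaches_nil.
  - eapply reaches_ret; eauto. apply reaches_nil.
Qed.

Lemma in_inc psi v e : In e (inc psi v) <-> In e (all_edges psi) /\ child psi e = v.
Proof.
  unfold inc. rewrite filter_In. rewrite Nat.eqb_eq. tauto.
Qed.

Lemma nonroot_has_parent psi v : wf_network psi -> v < nn psi -> is_root (kind psi v) = false ->
  exists e, In e (inc psi v).
Proof.
  intros [_ [D _]] Hv Hr. specialize (D v Hv).
  destruct (inc psi v) as [|e l] eqn:E.
  - simpl in D. destruct (kind psi v); simpl in *; discriminate.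
  - exists e; simpl; auto.
Qed.

Lemma root_reaches_all psi r : wf_network psi -> r < nn psi -> is_root (kind psi r) = true ->
  (forall u, u < nn psi -> is_root (kind psi u) = true -> u = r) ->
  forall v, v < nn psi -> exists p, reaches psi r p v.
Proof.
  intros W Hr Hroot Uniq.
  assert (forall k v, v < nn psi -> nn psi - v <= k -> exists p, reaches psi r p v).
  { induction k; intros v Hv Hk; [lia|].
    destruct (is_root (kind psi v)) eqn:Rv.
    - rewrite (Uniq v Hv Rv). exists []; apply reaches_nil.
    - destruct (nonroot_has_parent psi v W Hv Rv) as [e He].
      apply in_inc in He. destruct He as [He Hc]. apply in_all_edges in He.
      destruct He as [u [Hu Hu2]].
      pose proof (wf_acyclic psi W u Hu e Hu2) as Lt. rewrite Hc in Lt.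
      destruct (IHk u Hu ltac:(lia)) as [p Hp].
      exists (p ++ edge_pos psi e). eapply reaches_app; eauto.
      rewrite <- Hc. apply reaches_edge; auto. }
  intros v Hv. apply (H (nn psi) v Hv). lia.
Qed.

Lemma root_is_last psi r : wf_network psi -> r < nn psi -> is_root (kind psi r) = true ->
  (forall u, u < nn psi -> is_root (kind psi u) = true -> u = r) -> r = nn psi - 1.
Proof.
  intros W Hr Hroot Uniq.
  destruct (Nat.eq_dec r (nn psi - 1)) as [E|NE]; auto. exfalso.
  set (v := nn psi - 1).
  assert (Hv : v < nn psi) by (unfold v; lia).
  destruct (is_root (kind psi v)) eqn:Rv.
  - apply NE. symmetry. apply Uniq; auto.
  - destruct (nonroot_has_parent psi v W Hv Rv) as [e He].
    apply in_inc in He. destruct He as [He Hc]. apply in_all_edges in He.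
    destruct He as [u [Hu Hu2]].
    pose proof (wf_acyclic psi W u Hu e Hu2) as Lt. rewrite Hc in Lt. unfold v in Lt. lia.
Qed.

Lemma lbeq_eq p q : lbeq p q = true -> p = q.
Proof.
  revert q; induction p as [|a p IH]; destruct q as [|b q]; simpl; intros H; try discriminate; auto.
  apply andb_prop in H. destruct H as [H1 H2]. apply Bool.eqb_prop in H1. subst. f_equal; auto.
Qed.

Lemma lbeq_refl p : lbeq p p = true.
Proof. induction p; simpl; auto. rewrite IHp, Bool.eqb_reflx; auto. Qed.

Lemma mul_tree_mul_at psi r : acyclic psi -> r < nn psi -> mul_tree psi r = mul_at psi r.
Proof. intros A Hr. unfold mul_tree. apply mul_from_fuel; auto. Qed.

Lemma label_at_leaf psi r p l a :
  acyclic psi -> r < nn psi -> reaches psi r p l -> kind psi l = NLeaf a ->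
  l < nn psi -> label_at (mul_tree psi r) p = Some a.
Proof.
  intros A Hr H Hk Hl. rewrite mul_tree_mul_at by auto.
  rewrite <- (app_nil_r p). rewrite (label_at_reaches psi r p l A H Hr []).
  rewrite mul_at_unfold by auto. rewrite Hk. reflexivity.
Qed.

Lemma restrict_selection psi r (sel : taxon -> list bool) :
  acyclic psi -> r < nn psi -> is_root (kind psi r) = true ->
  (forall x, label_at (mul_tree psi r) (sel x) = Some x) ->
  forall x y z, x <> y -> x <> z -> y <> z ->
  exists tr,
    restrict (fun p => existsb (fun x => lbeq p (sel x)) all_taxa) (mul_tree psi r) = Some tr /\
    (exists o, outgroup tr = Some o) /\
    (forall Q, prefix Q (sel x) -> prefix Q (sel y) -> ~ prefix Q (sel z) -> outgroup tr = Some z).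
Proof.
  intros A Hr Hroot HL x y z Dxy Dxz Dyz.
  assert (Dsel : forall a b, a <> b -> sel a <> sel b).
  { intros a b D E. pose proof (HL a). pose proof (HL b). rewrite E in *. congruence. }
  apply restrict_three with (w1 := x) (w2 := y) (w3 := z); auto.
  - apply existsb_exists. exists x; split; [destruct x; simpl; auto|apply lbeq_refl].
  - apply existsb_exists. exists y; split; [destruct y; simpl; auto|apply lbeq_refl].
  - apply existsb_exists. exists z; split; [destruct z; simpl; auto|apply lbeq_refl].
  - intros p Kp _. apply existsb_exists in Kp. destruct Kp as [a [_ Ha]].
    apply lbeq_eq in Ha. subst p.
    destruct x, y, z; try congruence; destruct a; auto.
Qed.

Lemma parental_exists psi : wf_network psi -> exists t, parental psi t.
Proof.
  intros W. pose proof (wf_acyclic psi W) as A.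
  destruct W as [A0 [D [[r [Hr [Hroot Uniq]]] Lv]]].
  assert (W : wf_network psi) by (repeat split; eauto).
  assert (Hsel : forall a, exists p, label_at (mul_tree psi r) p = Some a).
  { intros a. destruct (Lv a) as [l [Hl [Hk _]]].
    destruct (root_reaches_all psi r W Hr Hroot Uniq l Hl) as [p Hp].
    exists p. eapply label_at_leaf; eauto. }
  destruct (Hsel TA) as [pa Ha], (Hsel TB) as [pb Hb], (Hsel TC) as [pc Hc].
  set (sel := fun a => match a with TA => pa | TB => pb | TC => pc end).
  destruct (restrict_selection psi r sel A Hr Hroot ltac:(intros [| |]; auto) TA TB TC)
    as [tr [E [[o Ho] _]]]; try discriminate.
  exists o. unfold parental. exists r; split; auto; split; auto.
  exists sel; split; [intros [| |]; auto|]. exists tr; auto.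
Qed.

(** * A parental tree from a separating edge *)

Lemma visited_edge psi u e w f q :
  In e (out_edges psi u) -> In w (visited psi f u (edge_pos psi e ++ q)) ->
  w = u \/ exists f', In w (visited psi f' (child psi e) q).
Proof.
  intros He Hin. pose proof (out_edges_fst psi u e He) as F.
  destruct f as [|f]; simpl in Hin; [destruct Hin as [<-|[]]; auto|].
  destruct Hin as [<-|Hin]; [auto|right; exists f].
  unfold edge_pos, child in *. rewrite F in *.
  unfold out_edges in He. destruct (kind psi u) eqn:Hk; simpl in He;
  repeat (destruct He as [He|He]; [subst e; simpl in *; auto|]); try contradiction.
Qed.

Section Subtree_positions.

Variables (psi : network) (r : nat).
Hypotheses (A : acyclic psi) (Hr : r < nn psi).

Lemma visited_of_prefix P0 c q P :
  reaches psi r P0 c -> prefix (P0 ++ q) P -> In c (visited psi (nn psi) r P).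
Proof.
  intros H0 [R ->]. rewrite <- app_assoc. apply visited_app, reaches_visited; auto.
Qed.

Lemma not_visited_from_later_edge c u2 e2 P2 q2 :
  c < u2 < nn psi -> In e2 (out_edges psi u2) -> child psi e2 < c -> reaches psi r P2 u2 ->
  ~ In c (visited psi (nn psi) r (P2 ++ edge_pos psi e2 ++ q2)).
Proof.
  intros Hu2 He2 Hch H2 Hin.
  destruct (visited_split psi r P2 u2 _ c _ A H2 Hr Hin) as [Le|[f' Hin']]; [lia|].
  destruct (visited_edge psi u2 e2 c f' q2 He2 Hin') as [Ec|[f'' Hin'']]; [lia|].
  apply visited_le in Hin''; auto; lia.
Qed.

Lemma not_visited_from_later_leaf c lz z P2 :
  c < lz -> kind psi lz = NLeaf z -> reaches psi r P2 lz ->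
  ~ In c (visited psi (nn psi) r P2).
Proof.
  intros Hlz Kz H2 Hin. rewrite <- (app_nil_r P2) in Hin.
  destruct (visited_split psi r P2 lz [] c _ A H2 Hr Hin) as [Le|[[|f'] Hin']]; [lia| |];
    simpl in Hin'; [|rewrite Kz in Hin']; destruct Hin' as [|[]]; lia.
Qed.

End Subtree_positions.

Lemma not_prefix_sibling_edge psi c e e2 P0 q2 :
  In e (out_edges psi c) -> In e2 (out_edges psi c) -> e2 <> e ->
  ~ prefix (P0 ++ edge_pos psi e) (P0 ++ edge_pos psi e2 ++ q2).
Proof.
  intros He He2 Dee [R ER]. rewrite <- app_assoc in ER. apply app_inv_head in ER.
  pose proof (out_edges_fst psi c e He) as F1. pose proof (out_edges_fst psi c e2 He2) as F2.
  unfold edge_pos in ER. rewrite F1, F2 in ER.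
  unfold out_edges in He, He2. destruct (kind psi c); simpl in He, He2; try contradiction;
    repeat (destruct He as [He|He]; [subst e|]); try contradiction;
    repeat (destruct He2 as [He2|He2]; [subst e2|]); try contradiction;
    simpl in ER; inversion ER; congruence.
Qed.

(* The lineage carrying [z] is, at the time node [c] is processed, not below
   the edge [e]: either on another edge (whose child lies below [c]) or at a leaf
   not yet processed. *)
Definition outside_edge psi c e z : Prop :=
  (exists u2 e2 q2 lz, c <= u2 < nn psi /\ In e2 (out_edges psi u2) /\ e2 <> e /\
     child psi e2 < c /\ reaches psi (child psi e2) q2 lz /\ kind psi lz = NLeaf z /\ lz < nn psi)
  \/ (exists lz, c < lz < nn psi /\ kind psi lz = NLeaf z).

Lemma outside_edge_position psi r c e z P0 :
  wf_network psi -> r < nn psi -> is_root (kind psi r) = true ->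
  (forall u, u < nn psi -> is_root (kind psi u) = true -> u = r) ->
  reaches psi r P0 c -> In e (out_edges psi c) -> outside_edge psi c e z ->
  exists pz lz, reaches psi r pz lz /\ kind psi lz = NLeaf z /\ lz < nn psi /\
    ~ prefix (P0 ++ edge_pos psi e) pz.
Proof.
  intros W Hr Hroot Uniq HP0 He Hz. pose proof (wf_acyclic psi W) as A.
  destruct Hz as [[u2 [e2 [q2 [lz [Hu2 [He2 [Dee [Hch [Rz [Kz Lz]]]]]]]]]] | [lz [Hlz Kz]]].
  - destruct (root_reaches_all psi r W Hr Hroot Uniq u2 ltac:(lia)) as [P2 HP2].
    destruct (Nat.eq_dec u2 c) as [->|Nu]; [clear P2 HP2; set (P2 := P0)|].
    all: exists (P2 ++ edge_pos psi e2 ++ q2), lz; repeat split; auto;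
      [ eapply reaches_app;
          [eassumption | eapply reaches_app; [now apply reaches_edge | eassumption]] |].
    + now apply not_prefix_sibling_edge with c.
    + intros HQ. apply (not_visited_from_later_edge psi r A Hr c u2 e2 P2 q2); auto; [lia|].
      eapply visited_of_prefix; eauto.
  - destruct (root_reaches_all psi r W Hr Hroot Uniq lz ltac:(lia)) as [P2 HP2].
    exists P2, lz. repeat split; auto; [lia|]. intros HQ.
    apply (not_visited_from_later_leaf psi r A Hr c lz z P2); auto;
      [lia | eapply visited_of_prefix; eauto].
Qed.

(* Retaining the three leaves of the MUL-tree, [x] and [y] form the cherry
   below [e], so [z] is the outgroup. *)
Lemma parental_of_separating_edge psi x y z c e qx qy lx ly :
  wf_network psi -> x <> y -> x <> z -> y <> z ->
  c < nn psi -> In e (out_edges psi c) ->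
  reaches psi (child psi e) qx lx -> kind psi lx = NLeaf x -> lx < nn psi ->
  reaches psi (child psi e) qy ly -> kind psi ly = NLeaf y -> ly < nn psi ->
  outside_edge psi c e z -> parental psi z.
Proof.
  intros W Dxy Dxz Dyz Hc He Rx Kx Lx Ry Ky Ly Hz.
  pose proof (wf_acyclic psi W) as A.
  destruct (proj1 (proj2 (proj2 W))) as [r [Hr [Hroot Uniq]]].
  destruct (root_reaches_all psi r W Hr Hroot Uniq c Hc) as [P0 HP0].
  destruct (outside_edge_position psi r c e z P0 W Hr Hroot Uniq HP0 He Hz)
    as [pz [lz [Rz [Kz [Lz NP]]]]].
  set (Q := P0 ++ edge_pos psi e) in NP.
  assert (HQ : reaches psi r Q (child psi e))
    by (apply reaches_app with c; auto; apply reaches_edge; auto).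
  set (sel := fun a => if taxon_eqb a x then Q ++ qx else if taxon_eqb a y then Q ++ qy else pz).
  assert (Sx : sel x = Q ++ qx) by (unfold sel; now rewrite taxon_eqb_refl).
  assert (Sy : sel y = Q ++ qy)
    by (unfold sel; now rewrite taxon_eqb_neq, taxon_eqb_refl by congruence).
  assert (Sz : sel z = pz) by (unfold sel; now rewrite !taxon_eqb_neq by congruence).
  assert (HL : forall a, label_at (mul_tree psi r) (sel a) = Some a).
  { intros a. assert (a = x \/ a = y \/ a = z) as [-> | [-> | ->]]
      by (destruct a, x, y, z; intuition congruence).
    - rewrite Sx. eapply label_at_leaf; eauto. eapply reaches_app; eauto.
    - rewrite Sy. eapply label_at_leaf; eauto. eapply reaches_app; eauto.
    - rewrite Sz. eapply label_at_leaf; eauto. }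
  destruct (restrict_selection psi r sel A Hr Hroot HL x y z Dxy Dxz Dyz) as [tr [E [_ Ho]]].
  exists r; split; auto; split; auto. exists sel; split; auto. exists tr; split; auto.
  apply (Ho Q); [rewrite Sx | rewrite Sy | rewrite Sz]; auto; eexists; reflexivity.
Qed.
Open Scope R_scope.

Definition sumR (l : list R) : R := fold_right Rplus 0 l.

Lemma sumR_app l1 l2 : sumR (l1 ++ l2) = sumR l1 + sumR l2.
Proof. induction l1; simpl; [lra|]. unfold sumR in *; simpl; rewrite IHl1; lra. Qed.

Lemma sumR_map_balance x y z L : sumR (map (balance x y z) L) = balance_list x y z L.
Proof. induction L; simpl; auto. unfold sumR, balance_list in *; simpl. now rewrite IHL. Qed.

Lemma list_sum_map_occ a L : list_sum (map (occ a) L) = occ_list a L.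
Proof. induction L; simpl; auto. Qed.

Definition lineages_on (b : nat -> bool -> list tree) (e : edge) := b (fst e) (snd e).

Definition edge_eq_dec : forall e1 e2 : edge, {e1 = e2} + {e1 <> e2}.
Proof. decide equality; [apply Bool.bool_dec | apply Nat.eq_dec]. Defined.

Lemma lineages_upd_eq b e T : lineages_on (upd b e T) e = T :: lineages_on b e.
Proof. unfold lineages_on, upd. rewrite Nat.eqb_refl, Bool.eqb_reflx. auto. Qed.

Lemma lineages_upd_neq b e0 e T : e <> e0 -> lineages_on (upd b e0 T) e = lineages_on b e.
Proof.
  intros D. unfold lineages_on, upd. destruct (Nat.eqb (fst e) (fst e0)) eqn:E1; simpl; auto.
  destruct (Bool.eqb (snd e) (snd e0)) eqn:E2; auto.
  apply Nat.eqb_eq in E1. apply Bool.eqb_prop in E2. destruct e, e0; simpl in *; subst; congruence.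
Qed.

Lemma sumR_upd (g : list tree -> R) (hh : tree -> R) (Hg : forall T L, g (T :: L) = hh T + g L)
  b e0 T Es : NoDup Es ->
  sumR (map (fun e => g (lineages_on (upd b e0 T) e)) Es) =
  sumR (map (fun e => g (lineages_on b e)) Es) + (if in_dec edge_eq_dec e0 Es then hh T else 0).
Proof.
  induction Es as [|e Es IH]; intros ND; simpl; [lra|].
  inversion ND; subst. unfold sumR in *; simpl. rewrite IH by auto.
  destruct (edge_eq_dec e e0) as [<-|D].
  - rewrite lineages_upd_eq, Hg. destruct (edge_eq_dec e e); [|congruence].
    destruct (in_dec edge_eq_dec e Es); [contradiction|]. simpl; lra.
  - rewrite lineages_upd_neq by auto. destruct (in_dec edge_eq_dec e0 Es);
    destruct (edge_eq_dec e e0); try congruence; simpl; lra.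
Qed.

Lemma list_sum_upd (g : list tree -> nat) (hh : tree -> nat)
  (Hg : forall T L, g (T :: L) = (hh T + g L)%nat)
  b e0 T Es : NoDup Es ->
  list_sum (map (fun e => g (lineages_on (upd b e0 T) e)) Es) =
  (list_sum (map (fun e => g (lineages_on b e)) Es)
   + (if in_dec edge_eq_dec e0 Es then hh T else 0))%nat.
Proof.
  induction Es as [|e Es IH]; intros ND; simpl; [lia|].
  inversion ND; subst. unfold list_sum in *; simpl. rewrite IH by auto.
  destruct (edge_eq_dec e e0) as [<-|D].
  - rewrite lineages_upd_eq, Hg. destruct (edge_eq_dec e e); [|congruence].
    destruct (in_dec edge_eq_dec e Es); [contradiction|]. simpl; lia.
  - rewrite lineages_upd_neq by auto. destruct (in_dec edge_eq_dec e0 Es);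
    destruct (edge_eq_dec e e0); try congruence; simpl; lia.
Qed.

Lemma distribute_weights_nonneg ws : (forall ew, In ew ws -> 0 <= snd ew) ->
  forall L b px, In px (distribute ws L b) -> 0 <= fst px.
Proof.
  intros Hw. induction L as [|T L IH]; intros b px Hp; simpl in Hp.
  - destruct Hp as [<-|[]]; simpl; lra.
  - apply in_dbind in Hp. destruct Hp as [p0 [q [H1 [H2 ->]]]].
    apply in_map_iff in H2. destruct H2 as [ew [<- H3]]. simpl.
    apply Rmult_le_pos; eauto.
Qed.

Lemma distribute_mass ws : sumR (map snd ws) = 1 -> forall L b, mass (distribute ws L b) = 1.
Proof.
  intros Hs. induction L as [|T L IH]; intros b; unfold mass in *; simpl.
  - rewrite expect_dret. reflexivity.
  - rewrite expect_dbind. transitivity (expect (distribute ws L b) (fun _ => 1)); [|apply IH].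
    apply expect_ext. intros px _. clear IH. unfold expect. rewrite map_map. simpl.
    transitivity (sumR (map snd ws)); [|exact Hs].
    unfold sumR. f_equal. apply map_ext. intros; lra.
Qed.

Lemma distribute_sum_R (G : (nat -> bool -> list tree) -> R) (hh : tree -> R) ws :
  (forall b' ew T, In ew ws -> G (upd b' (fst ew) T) = G b' + hh T) ->
  forall L b px, In px (distribute ws L b) -> G (snd px) = G b + sumR (map hh L).
Proof.
  intros HG. induction L as [|T L IH]; intros b px Hp; simpl in *.
  - destruct Hp as [<-|[]]; simpl; unfold sumR; simpl; lra.
  - apply in_dbind in Hp. destruct Hp as [p0 [q [H1 [H2 ->]]]].
    apply in_map_iff in H2. destruct H2 as [ew [<- H3]]. simpl.
    rewrite HG by auto. rewrite (IH b p0 H1). unfold sumR; simpl; lra.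
Qed.

Lemma distribute_sum_N (G : (nat -> bool -> list tree) -> nat) (hh : tree -> nat) ws :
  (forall b' ew T, In ew ws -> G (upd b' (fst ew) T) = (G b' + hh T)%nat) ->
  forall L b px, In px (distribute ws L b) -> G (snd px) = (G b + list_sum (map hh L))%nat.
Proof.
  intros HG. induction L as [|T L IH]; intros b px Hp; simpl in *.
  - destruct Hp as [<-|[]]; simpl; unfold list_sum; simpl; lia.
  - apply in_dbind in Hp. destruct Hp as [p0 [q [H1 [H2 ->]]]].
    apply in_map_iff in H2. destruct H2 as [ew [<- H3]]. simpl.
    rewrite HG by auto. rewrite (IH b p0 H1). unfold list_sum; simpl; lia.
Qed.

Lemma distribute_occ_source ws L b px : In px (distribute ws L b) -> forall e a,
  (0 < occ_list a (lineages_on (snd px) e))%nat ->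
  (0 < occ_list a (lineages_on b e))%nat \/ ((0 < occ_list a L)%nat /\ In e (map fst ws)).
Proof.
  revert b px. induction L as [|T L IH]; intros b px Hp e a Ho; simpl in *.
  - destruct Hp as [<-|[]]; simpl in *; auto.
  - apply in_dbind in Hp. destruct Hp as [p0 [q [H1 [H2 ->]]]].
    apply in_map_iff in H2. destruct H2 as [ew [<- H3]]. simpl in Ho.
    destruct (edge_eq_dec e (fst ew)) as [->|D].
    + rewrite lineages_upd_eq in Ho. unfold occ_list in *; simpl in *.
      destruct (occ a T) eqn:Eo.
      * simpl in Ho. destruct (IH b p0 H1 _ a Ho) as [?|[? ?]];
          [left; auto | right; split; [lia|auto]].
      * right; split; [lia|]. apply in_map; auto.
    + rewrite lineages_upd_neq in Ho by auto.
      destruct (IH b p0 H1 _ a Ho) as [?|[? ?]]; [left; auto|].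
      right; split; [unfold occ_list in *; simpl in *; lia|auto].
Qed.

Lemma length_filter_unique {A} (P : A -> bool) (s : list A) l :
  NoDup s -> In l s -> P l = true -> (forall u, In u s -> P u = true -> u = l) ->
  length (filter P s) = 1%nat.
Proof.
  induction s as [|u s IH]; intros ND Hin Hl Hu; simpl in *; [contradiction|].
  inversion ND; subst. destruct Hin as [<-|Hin].
  - rewrite Hl. simpl. f_equal.
    assert (forall v, In v s -> P v = false).
    { intros v Hv. destruct (P v) eqn:E; auto.
      specialize (Hu v (or_intror Hv) E). subst; contradiction. }
    clear - H. induction s; simpl; auto. rewrite H by (simpl; auto).
    apply IHs. intros; apply H; simpl; auto.
  - destruct (P u) eqn:E.
    + specialize (Hu u (or_introl eq_refl) E). subst. contradiction.
    + apply IH; auto.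
Qed.

Lemma list_sum_pos {A} (g : A -> nat) l :
  (0 < list_sum (map g l))%nat -> exists a, In a l /\ (0 < g a)%nat.
Proof.
  induction l as [|a l IH]; simpl; unfold list_sum; simpl; intros H; [lia|].
  destruct (g a) eqn:E.
  - simpl in H. destruct (IH H) as [a' [? ?]]; eauto.
  - exists a; split; auto; lia.
Qed.

Lemma list_sum_ge_elem {A} (g : A -> nat) l a : In a l -> (g a <= list_sum (map g l))%nat.
Proof.
  induction l as [|a' l IH]; simpl; intros H; [contradiction|]. unfold list_sum in *; simpl.
  destruct H as [<-|H]; [lia|]. specialize (IH H); lia.
Qed.

Definition balance_opt x y z (f : option tree) : R :=
  match f with Some T => balance x y z T | None => 0 end.

Definition occ_opt a (f : option tree) : nat :=
  match f with Some T => occ a T | None => 0%nat end.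

Definition is_leaf_of a (k : nkind) : bool :=
  match k with NLeaf b => taxon_eqb a b | _ => false end.

Lemma is_leaf_of_spec a kd : is_leaf_of a kd = true -> kd = NLeaf a.
Proof. destruct kd; simpl; try discriminate. intros H; apply taxon_eqb_spec in H; subst; auto. Qed.

Lemma filter_nonempty {A} (P : A -> bool) l :
  (0 < length (filter P l))%nat -> exists a, In a l /\ P a = true.
Proof.
  induction l; simpl; intros H; [lia|]. destruct (P a) eqn:E; eauto.
  destruct (IHl H) as [b [? ?]]; eauto.
Qed.

(** * The expected balance never decreases *)

Section Balance_submartingale.

Variables (psi : network) (lam gam : nat -> bool -> R) (x y z : taxon).
Hypotheses (W : wf_network psi) (VL : valid_lengths psi lam) (VG : valid_gammas psi gam).
Hypotheses (Dxy : x <> y) (Dxz : x <> z) (Dyz : y <> z) (NP : ~ parental psi z).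

(* After the nodes [0 .. k-1] are processed, the lineages in flight sit at the
   bottom of the edges leaving the nodes [k ..]. *)
Definition pending_edges k := flat_map (out_edges psi) (seq k (nn psi - k)).

Definition leaves_from a k :=
  length (filter (fun u => is_leaf_of a (kind psi u)) (seq k (nn psi - k))).

Definition leaf_below v a :=
  exists q l, reaches psi v q l /\ kind psi l = NLeaf a /\ (l < nn psi)%nat.

Definition taxon_count k a (st : state) :=
  (list_sum (map (fun e => occ_list a (lineages_on (fst st) e)) (pending_edges k))
   + leaves_from a k + occ_opt a (snd st))%nat.

Definition run_invariant k (st : state) :=
  (forall a, taxon_count k a st = 1%nat) /\
  (forall e a, In e (pending_edges k) -> (0 < occ_list a (lineages_on (fst st) e))%nat ->
     (child psi e < k)%nat /\ leaf_below (child psi e) a) /\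
  ((k < nn psi)%nat -> snd st = None).

Definition state_balance k (st : state) :=
  sumR (map (fun e => balance_list x y z (lineages_on (fst st) e)) (pending_edges k))
  + balance_opt x y z (snd st).

Lemma pending_edges_cons k :
  (k < nn psi)%nat -> pending_edges k = out_edges psi k ++ pending_edges (S k).
Proof.
  intros H. unfold pending_edges. replace (nn psi - k)%nat with (S (nn psi - S k)) by lia.
  reflexivity.
Qed.

Lemma pending_edges_end : pending_edges (nn psi) = [].
Proof. unfold pending_edges. now rewrite Nat.sub_diag. Qed.

Lemma in_pending_edges k e :
  In e (pending_edges k) <-> exists u, (k <= u < nn psi)%nat /\ In e (out_edges psi u).
Proof.
  unfold pending_edges. rewrite in_flat_map.
  split; intros [u [H1 H2]]; exists u; split; auto; apply in_seq in H1 || apply in_seq; lia.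
Qed.

Lemma pending_edges_nodup k : NoDup (pending_edges k).
Proof.
  unfold pending_edges. generalize (seq_NoDup (nn psi - k) k).
  induction (seq k (nn psi - k)) as [|u l IH]; intros ND; simpl; [constructor|].
  inversion ND; subst. apply NoDup_app; auto.
  - unfold out_edges; destruct (kind psi u); repeat constructor; simpl; intuition discriminate.
  - intros e He1 He2. apply in_flat_map in He2. destruct He2 as [u' [H3 H4]].
    apply out_edges_fst in He1. apply out_edges_fst in H4. subst. contradiction.
Qed.

Lemma pending_edges_succ k e : In e (pending_edges (S k)) -> In e (pending_edges k).
Proof. rewrite !in_pending_edges. intros [u [H1 H2]]. exists u; split; auto; lia. Qed.

Lemma out_edges_pending k e :
  (k < nn psi)%nat -> In e (out_edges psi k) -> In e (pending_edges k).
Proof. intros H He. apply in_pending_edges. exists k; split; auto; lia. Qed.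

Lemma inc_pending k e : In e (inc psi k) -> In e (pending_edges (S k)) /\ child psi e = k.
Proof.
  intros H. apply in_inc in H. destruct H as [H Hc]. apply in_all_edges in H.
  destruct H as [u [Hu He]]. pose proof (wf_acyclic psi W u Hu e He). split; auto.
  apply in_pending_edges. exists u; split; auto; lia.
Qed.

Lemma leaves_from_cons a k : (k < nn psi)%nat ->
  leaves_from a k = ((if is_leaf_of a (kind psi k) then 1 else 0) + leaves_from a (S k))%nat.
Proof.
  intros H. unfold leaves_from. replace (nn psi - k)%nat with (S (nn psi - S k)) by lia. simpl.
  destruct (is_leaf_of a (kind psi k)); reflexivity.
Qed.

Lemma leaves_from_end a : leaves_from a (nn psi) = 0%nat.
Proof. unfold leaves_from. now rewrite Nat.sub_diag. Qed.

Lemma balance_sum_upd k b e0 T : In e0 (pending_edges k) ->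
  sumR (map (fun e => balance_list x y z (lineages_on (upd b e0 T) e)) (pending_edges k)) =
  sumR (map (fun e => balance_list x y z (lineages_on b e)) (pending_edges k)) + balance x y z T.
Proof.
  intros H.
  rewrite (sumR_upd (balance_list x y z) (balance x y z)) by (auto; apply pending_edges_nodup).
  destruct (in_dec edge_eq_dec e0 (pending_edges k)); [auto|contradiction].
Qed.

Lemma occ_sum_upd a k b e0 T : In e0 (pending_edges k) ->
  list_sum (map (fun e => occ_list a (lineages_on (upd b e0 T) e)) (pending_edges k)) =
  (list_sum (map (fun e => occ_list a (lineages_on b e)) (pending_edges k)) + occ a T)%nat.
Proof.
  intros H. rewrite (list_sum_upd (occ_list a) (occ a)) by (auto; apply pending_edges_nodup).
  destruct (in_dec edge_eq_dec e0 (pending_edges k)); [auto|contradiction].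
Qed.

Lemma outside_edge_of_invariant k b e :
  (k < nn psi)%nat -> run_invariant k (b, None) -> In e (out_edges psi k) ->
  (forall a, kind psi k <> NLeaf a) -> occ_list z (lineages_on b e) = 0%nat ->
  outside_edge psi k e z.
Proof.
  intros Hk [I1 [I2 _]] He NL Oz. pose proof (I1 z) as Hz. unfold taxon_count in Hz; simpl in Hz.
  destruct (list_sum (map (fun e0 => occ_list z (lineages_on b e0)) (pending_edges k))) eqn:S.
  - right. destruct (filter_nonempty (fun u => is_leaf_of z (kind psi u)) (seq k (nn psi - k)))
      as [lz [Hin Hl]]; [unfold leaves_from in Hz; lia|].
    apply in_seq in Hin. apply is_leaf_of_spec in Hl. exists lz. split; auto.
    assert (lz <> k) by (intros ->; apply (NL z); auto). lia.
  - left. destruct (list_sum_pos _ _ ltac:(rewrite S; lia)) as [e2 [He2 Oz2]].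
    destruct (I2 e2 z He2 Oz2) as [Hc2 [q2 [lz [Rz [Kz Lz]]]]].
    apply in_pending_edges in He2. destruct He2 as [u2 [Hu2 Ho2]].
    exists u2, e2, q2, lz. repeat split; auto; try lia. intros ->. lia.
Qed.

Lemma pending_pair_not_xy k b e u v :
  (k < nn psi)%nat -> run_invariant k (b, None) -> In e (out_edges psi k) ->
  (forall a, kind psi k <> NLeaf a) -> (u = x /\ v = y \/ u = y /\ v = x) ->
  lineages_on b e <> [Lf u; Lf v].
Proof.
  intros Hk Inv He NL Huv Eb. pose proof Inv as [_ [I2 _]].
  assert (HeU : In e (pending_edges k)) by (apply out_edges_pending; auto).
  assert (Occ : forall a, (a = x \/ a = y) -> (0 < occ_list a (lineages_on b e))%nat).
  { intros a Ha. rewrite Eb. unfold occ_list; simpl.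
    destruct Huv as [[-> ->]|[-> ->]], Ha as [->| ->]; rewrite taxon_eqb_refl; simpl; lia. }
  destruct (I2 e x HeU (Occ x (or_introl eq_refl))) as [_ [qx [lx [Rx [Kx Lx]]]]].
  destruct (I2 e y HeU (Occ y (or_intror eq_refl))) as [_ [qy [ly [Ry [Ky Ly]]]]].
  apply NP, (parental_of_separating_edge psi x y z k e qx qy lx ly); auto.
  apply outside_edge_of_invariant with b; auto.
  rewrite Eb. unfold occ_list; simpl.
  destruct Huv as [[-> ->]|[-> ->]]; rewrite !taxon_eqb_neq by congruence; auto.
Qed.

Lemma pending_edge_safe k b e :
  (k < nn psi)%nat -> run_invariant k (b, None) -> In e (out_edges psi k) ->
  (forall a, kind psi k <> NLeaf a) -> balance_safe x y z (lineages_on b e).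
Proof.
  intros Hk Inv He NL. pose proof Inv as [I1 _].
  assert (HeU : In e (pending_edges k)) by (apply out_edges_pending; auto).
  split.
  - intros T1 T2 E2.
    destruct (cherry_score_nonneg_or x y z T1 T2 Dxy Dxz Dyz) as [?|[[-> ->]|[-> ->]]]; auto;
      exfalso; refine (pending_pair_not_xy k b e _ _ Hk Inv He NL _ E2); tauto.
  - intros T1 T2 T3 E3. apply balance_safe_three; auto.
    intros a. rewrite <- E3. specialize (I1 a). unfold taxon_count in I1; simpl in I1.
    pose proof (list_sum_ge_elem (fun e0 => occ_list a (lineages_on b e0)) _ e HeU).
    simpl in *. lia.
Qed.

Definition propagate (Ld : Defs.dist (list tree)) (ws : list (edge * R))
    (b : nat -> bool -> list tree) (f : option tree) : Defs.dist state :=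
  dbind Ld (fun L => map (fun pb => (fst pb, (snd pb, f))) (distribute ws L b)).

Definition branch_output k (Ld : Defs.dist (list tree)) (Cocc : taxon -> nat) :=
  forall px, In px Ld -> 0 <= fst px /\ (forall a, occ_list a (snd px) = Cocc a) /\
    (forall a, (0 < occ_list a (snd px))%nat -> leaf_below k a).

Definition inheritance_weights k (ws : list (edge * R)) :=
  (forall ew, In ew ws -> 0 <= snd ew) /\ sumR (map snd ws) = 1 /\
  (forall ew, In ew ws -> In (fst ew) (inc psi k)).

Lemma propagate_invariant k b f Ld ws Cocc :
  (k < nn psi)%nat -> run_invariant k (b, f) -> branch_output k Ld Cocc ->
  inheritance_weights k ws ->
  (forall a, taxon_count k a (b, f) = (Cocc a + taxon_count (S k) a (b, f))%nat) ->
  forall px, In px (propagate Ld ws b f) -> 0 <= fst px /\ run_invariant (S k) (snd px).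
Proof.
  intros Hk [I1 [I2 I3]] HLd [Hw [_ Hinc]] HOC px Hp.
  assert (WsU : forall ew, In ew ws -> In (fst ew) (pending_edges (S k)) /\ child psi (fst ew) = k)
    by (intros ew H; apply inc_pending; auto).
  apply in_dbind in Hp. destruct Hp as [pL [qy [HL [Hq ->]]]].
  apply in_map_iff in Hq. destruct Hq as [pb [<- Hpb]]. simpl.
  destruct (HLd pL HL) as [HpL [Hocc Hpos]].
  split; [apply Rmult_le_pos; auto; eapply distribute_weights_nonneg; eauto|].
  split; [|split].
  - intros a. unfold taxon_count; simpl.
    rewrite (distribute_sum_N (fun b0 => list_sum (map (fun e => occ_list a (lineages_on b0 e))
                                                  (pending_edges (S k)))) (occ a) ws)
      with (L := snd pL) (b := b) by (auto; intros b' ew T Hew; apply occ_sum_upd, WsU, Hew).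
    rewrite list_sum_map_occ, Hocc. specialize (I1 a). rewrite HOC in I1.
    unfold taxon_count in I1; simpl in I1. lia.
  - intros e a He Ho. simpl in Ho.
    destruct (distribute_occ_source ws (snd pL) b pb Hpb e a Ho) as [Ho'|[Ho' Hin]].
    + destruct (I2 e a (pending_edges_succ k e He) Ho'). split; auto.
    + apply in_map_iff in Hin. destruct Hin as [ew [<- Hew]]. destruct (WsU ew Hew) as [_ ->].
      split; auto.
  - intros Hk'. apply I3. lia.
Qed.

Lemma propagate_balance k b f Ld ws C :
  (forall px, In px Ld -> 0 <= fst px) -> mass Ld = 1 ->
  C <= expect Ld (balance_list x y z) -> inheritance_weights k ws ->
  state_balance k (b, f) = C + state_balance (S k) (b, f) ->
  state_balance k (b, f) <= expect (propagate Ld ws b f) (state_balance (S k)).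
Proof.
  intros HLd Hm HC [_ [Hs Hinc]] Hbal. unfold propagate. rewrite expect_dbind, Hbal.
  set (rest := sumR (map (fun e => balance_list x y z (lineages_on b e)) (pending_edges (S k)))).
  transitivity (expect Ld (fun L => (rest + balance_opt x y z f) + balance_list x y z L)).
  - rewrite expect_add_const, Hm. unfold state_balance; simpl. fold rest. lra.
  - apply Req_le, expect_ext. intros pL HL. rewrite (@expect_map _ state (fun b0 => (b0, f))).
    rewrite (expect_const _ _ (rest + balance_opt x y z f + balance_list x y z (snd pL))).
    + rewrite distribute_mass by auto. lra.
    + intros pb Hpb. unfold state_balance; simpl.
      rewrite (distribute_sum_R
                 (fun b0 => sumR (map (fun e => balance_list x y z (lineages_on b0 e))
                                                (pending_edges (S k)))) (balance x y z) ws)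
        with (L := snd pL) (b := b)
        by (auto; intros b' ew T Hew; apply balance_sum_upd, (inc_pending k), Hinc, Hew).
      rewrite sumR_map_balance. fold rest. lra.
Qed.

Lemma state_balance_cons k st : (k < nn psi)%nat ->
  state_balance k st =
  sumR (map (fun e => balance_list x y z (lineages_on (fst st) e)) (out_edges psi k))
  + state_balance (S k) st.
Proof.
  intros Hk. unfold state_balance. rewrite (pending_edges_cons k Hk), map_app, sumR_app. lra.
Qed.

Lemma taxon_count_cons k a st : (k < nn psi)%nat ->
  taxon_count k a st =
  (list_sum (map (fun e => occ_list a (lineages_on (fst st) e)) (out_edges psi k))
   + (if is_leaf_of a (kind psi k) then 1 else 0) + taxon_count (S k) a st)%nat.
Proof.
  intros Hk. unfold taxon_count.
  rewrite (pending_edges_cons k Hk), map_app, list_sum_app, (leaves_from_cons a k Hk). lia.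
Qed.

Lemma leaf_below_out_edges k b f a :
  (k < nn psi)%nat -> run_invariant k (b, f) ->
  (0 < list_sum (map (fun e => occ_list a (lineages_on b e)) (out_edges psi k)))%nat ->
  leaf_below k a.
Proof.
  intros Hk [_ [I2 _]] H. apply list_sum_pos in H. destruct H as [e [He Ho]].
  destruct (I2 e a (out_edges_pending k e Hk He) Ho) as [_ [q [l [R [K L]]]]].
  exists (edge_pos psi e ++ q), l. split; auto. eapply reaches_app; eauto. apply reaches_edge; auto.
Qed.

Lemma length_nonneg k e : (k < nn psi)%nat -> In e (out_edges psi k) -> 0 <= lam (fst e) (snd e).
Proof. intros Hk He. left. apply VL. apply in_all_edges. eauto. Qed.

Lemma unit_weights k : (k < nn psi)%nat -> indeg_req (kind psi k) = 1%nat ->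
  inheritance_weights k (map (fun e => (e, 1)) (inc psi k)).
Proof.
  intros Hk H. unfold inheritance_weights.
  pose proof (proj1 (proj2 W) k Hk) as D. rewrite H in D.
  destruct (inc psi k) as [|e0 [|e1 l]]; simpl in D; try lia.
  split; [|split];
    [intros ew [<-|[]]; simpl; lra | unfold sumR; simpl; lra | intros ew [<-|[]]; simpl; auto].
Qed.

Definition step_preserves k (st : state) :=
  (forall px, In px (step psi lam gam k st) -> 0 <= fst px /\ run_invariant (S k) (snd px)) /\
  state_balance k st <= expect (step psi lam gam k st) (state_balance (S k)).

Lemma step_tree k c1 c2 b : (k < nn psi)%nat -> run_invariant k (b, None) ->
  kind psi k = NTree c1 c2 -> step_preserves k (b, None).
Proof.
  intros Hk Inv Hkind.
  assert (O : out_edges psi k = [(k, false); (k, true)]) by (unfold out_edges; now rewrite Hkind).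
  assert (NL : forall a, kind psi k <> NLeaf a) by (intros a; rewrite Hkind; discriminate).
  assert (Hin1 : In (k, false) (out_edges psi k)) by (rewrite O; simpl; auto).
  assert (Hin2 : In (k, true) (out_edges psi k)) by (rewrite O; simpl; auto).
  pose proof (length_nonneg k _ Hk Hin1) as L1. pose proof (length_nonneg k _ Hk Hin2) as L2.
  pose proof (pending_edge_safe k b _ Hk Inv Hin1 NL) as C1.
  pose proof (pending_edge_safe k b _ Hk Inv Hin2 NL) as C2.
  pose proof (unit_weights k Hk ltac:(now rewrite Hkind)) as Ws.
  simpl in L1, L2. unfold lineages_on in C1, C2; simpl in C1, C2.
  unfold step_preserves, step. rewrite Hkind. cbn [fst snd is_root is_ret].
  split.
  - eapply propagate_invariant
      with (Cocc := fun a => (occ_list a (b k false) + occ_list a (b k true))%nat); eauto.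
    + intros px Hp. destruct (in_coal_pair _ _ _ _ px L1 L2 Hp) as [Hw Ho].
      repeat split; auto. intros a Ha. apply (leaf_below_out_edges k b None a Hk Inv).
      rewrite O. unfold lineages_on; simpl. rewrite Ho in Ha. lia.
    + intros a. rewrite (taxon_count_cons k a _ Hk), O, Hkind. unfold lineages_on; simpl. lia.
  - eapply propagate_balance
      with (C := balance_list x y z (b k false) + balance_list x y z (b k true)); eauto.
    + intros px Hp. exact (proj1 (in_coal_pair _ _ _ _ px L1 L2 Hp)).
    + apply coal_pair_mass.
    + now apply coal_pair_balance_le.
    + rewrite (state_balance_cons k _ Hk), O. unfold lineages_on, sumR; simpl. lra.
Qed.

Lemma step_leaf k t b : (k < nn psi)%nat -> run_invariant k (b, None) ->
  kind psi k = NLeaf t -> step_preserves k (b, None).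
Proof.
  intros Hk Inv Hkind.
  assert (O : out_edges psi k = []) by (unfold out_edges; now rewrite Hkind).
  pose proof (unit_weights k Hk ltac:(now rewrite Hkind)) as Ws.
  unfold step_preserves, step. rewrite Hkind. cbn [fst snd is_root is_ret].
  split.
  - eapply propagate_invariant with (Cocc := fun a => occ_list a [Lf t]); eauto.
    + intros px [<-|[]]. simpl. repeat split; [lra|]. intros a Ha.
      unfold occ_list in Ha; simpl in Ha. destruct (taxon_eqb a t) eqn:E; simpl in Ha; [|lia].
      apply taxon_eqb_spec in E; subst. exists [], k. split; [apply reaches_nil|auto].
    + intros a. rewrite (taxon_count_cons k a _ Hk), O, Hkind. unfold occ_list; simpl.
      destruct (taxon_eqb a t); simpl; lia.
  - eapply propagate_balance with (C := 0); eauto.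
    + intros px [<-|[]]. simpl; lra.
    + unfold mass. now rewrite expect_dret.
    + rewrite expect_dret. unfold balance_list; simpl; lra.
    + rewrite (state_balance_cons k _ Hk), O. unfold sumR; simpl. lra.
Qed.

Lemma reticulation_weights k c : (k < nn psi)%nat -> kind psi k = NRet c ->
  inheritance_weights k (map (fun e => (e, gam (fst e) (snd e))) (inc psi k)).
Proof.
  intros Hk Hkind. destruct (VG k Hk ltac:(now rewrite Hkind)) as [G1 G2].
  split; [|split].
  - intros ew Hew. apply in_map_iff in Hew. destruct Hew as [e [<- He]]. simpl. auto.
  - rewrite map_map. exact G2.
  - intros ew Hew. apply in_map_iff in Hew. destruct Hew as [e [<- He]]. simpl. auto.
Qed.

Lemma step_ret k c b : (k < nn psi)%nat -> run_invariant k (b, None) ->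
  kind psi k = NRet c -> step_preserves k (b, None).
Proof.
  intros Hk Inv Hkind.
  assert (O : out_edges psi k = [(k, false)]) by (unfold out_edges; now rewrite Hkind).
  assert (NL : forall a, kind psi k <> NLeaf a) by (intros a; rewrite Hkind; discriminate).
  assert (Hin : In (k, false) (out_edges psi k)) by (rewrite O; simpl; auto).
  pose proof (length_nonneg k _ Hk Hin) as L1. simpl in L1.
  pose proof (pending_edge_safe k b _ Hk Inv Hin NL) as C1. unfold lineages_on in C1; simpl in C1.
  pose proof (reticulation_weights k c Hk Hkind) as Ws.
  unfold step_preserves, step. rewrite Hkind. cbn [fst snd is_root is_ret].
  split.
  - eapply propagate_invariant with (Cocc := fun a => occ_list a (b k false)); eauto.
    + intros px Hp. repeat split; [eapply coal_weights_nonneg; eauto | apply (coal_occ _ _ _ Hp) |].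
      intros a Ha. apply (leaf_below_out_edges k b None a Hk Inv).
      rewrite O. unfold lineages_on; simpl. rewrite (coal_occ _ _ _ Hp) in Ha. lia.
    + intros a. rewrite (taxon_count_cons k a _ Hk), O, Hkind. unfold lineages_on; simpl. lia.
  - eapply propagate_balance with (C := balance_list x y z (b k false)); eauto.
    + intros px Hp. eapply coal_weights_nonneg; eauto.
    + apply coal_mass.
    + now apply coal_balance_le.
    + rewrite (state_balance_cons k _ Hk), O. unfold lineages_on, sumR; simpl. lra.
Qed.

Lemma root_is_last_node k c1 c2 : (k < nn psi)%nat -> kind psi k = NRoot c1 c2 -> S k = nn psi.
Proof.
  intros Hk Hkind. destruct (proj1 (proj2 (proj2 W))) as [r [Hr [Hroot Uniq]]].
  assert (k = r) as -> by (apply Uniq; auto; now rewrite Hkind).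
  pose proof (root_is_last psi r W Hr Hroot Uniq). lia.
Qed.

Lemma step_root k c1 c2 b : (k < nn psi)%nat -> run_invariant k (b, None) ->
  kind psi k = NRoot c1 c2 -> step_preserves k (b, None).
Proof.
  intros Hk Inv Hkind. pose proof (root_is_last_node k c1 c2 Hk Hkind) as Klast.
  assert (O : out_edges psi k = [(k, false); (k, true)]) by (unfold out_edges; now rewrite Hkind).
  assert (NL : forall a, kind psi k <> NLeaf a) by (intros a; rewrite Hkind; discriminate).
  assert (Hin1 : In (k, false) (out_edges psi k)) by (rewrite O; simpl; auto).
  assert (Hin2 : In (k, true) (out_edges psi k)) by (rewrite O; simpl; auto).
  pose proof (length_nonneg k _ Hk Hin1) as L1. pose proof (length_nonneg k _ Hk Hin2) as L2.
  pose proof (pending_edge_safe k b _ Hk Inv Hin1 NL) as C1.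
  pose proof (pending_edge_safe k b _ Hk Inv Hin2 NL) as C2.
  simpl in L1, L2. unfold lineages_on in C1, C2; simpl in C1, C2.
  assert (Pend : pending_edges (S k) = []) by (rewrite Klast; apply pending_edges_end).
  assert (Once : forall px, In px (coal_pair (lam k false) (lam k true) (b k false) (b k true)) ->
                 forall a, occ_list a (snd px) = 1%nat).
  { intros px Hp a. rewrite (proj2 (in_coal_pair _ _ _ _ px L1 L2 Hp)).
    pose proof (proj1 Inv a) as H. rewrite (taxon_count_cons k a _ Hk), O, Hkind in H.
    unfold taxon_count in H. rewrite Pend, Klast, leaves_from_end in H.
    unfold lineages_on in H; simpl in H. lia. }
  unfold step_preserves, step. rewrite Hkind. cbn [fst snd is_root is_ret].
  fold (coal_pair (lam k false) (lam k true) (b k false) (b k true)).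
  split.
  - intros px Hp. apply in_dbind in Hp. destruct Hp as [pL [qy [HL [Hq ->]]]].
    apply in_map_iff in Hq. destruct Hq as [pt [<- Hpt]]. simpl.
    split; [apply Rmult_le_pos; [apply (in_coal_pair _ _ _ _ pL L1 L2 HL)
                                | eapply coal_inf_weights_nonneg; eauto]|].
    split; [|split]; [| intros e a He; rewrite Pend in He; destruct He | lia].
    intros a. unfold taxon_count; simpl. rewrite Pend, Klast, leaves_from_end. simpl.
    rewrite (coal_inf_occ _ _ Hpt). apply Once; auto.
  - rewrite expect_dbind, (state_balance_cons k _ Hk), O.
    unfold state_balance; rewrite Pend. unfold sumR, lineages_on; simpl.
    apply Rle_trans with (expect (coal_pair (lam k false) (lam k true) (b k false) (b k true))
                                 (balance_list x y z)).
    + pose proof (coal_pair_balance_le x y z _ _ _ _ L1 L2 C1 C2). lra.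
    + apply expect_le. intros pL HL. split; [apply (in_coal_pair _ _ _ _ pL L1 L2 HL)|].
      rewrite (@expect_map tree state (fun T => (b, Some T))). simpl.
      rewrite (expect_ext _ _ (balance x y z)) by (intros; simpl; lra).
      destruct (root_lineages_safe x y z (snd pL) Dxy Dxz Dyz (Once pL HL)).
      now apply coal_inf_balance_le.
Qed.

Lemma step_sound k st : (k < nn psi)%nat -> run_invariant k st -> step_preserves k st.
Proof.
  intros Hk Inv. destruct st as [b f].
  assert (f = None) as -> by (apply Inv; auto).
  destruct (kind psi k) as [c1 c2|c1 c2|t|c] eqn:Hkind.
  - eapply step_root; eauto.
  - eapply step_tree; eauto.
  - eapply step_leaf; eauto.
  - eapply step_ret; eauto.
Qed.

Definition msnc_prefix k : Defs.dist state :=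
  fold_left (fun d c => dbind d (step psi lam gam c)) (seq 0 k) (dret ((fun _ _ => []), None)).

Lemma run_invariant_init : run_invariant 0 ((fun _ _ => []), None).
Proof.
  split; [|split]; [| intros e a _ H; cbv in H; lia | auto].
  intros a. unfold taxon_count; cbn [fst snd].
  replace (list_sum _) with 0%nat by (generalize (pending_edges 0); induction l; simpl; auto).
  simpl. rewrite Nat.add_0_r.
  destruct (proj2 (proj2 (proj2 W)) a) as [l [Hl [Hk U]]].
  unfold leaves_from. rewrite Nat.sub_0_r. apply length_filter_unique with l.
  - apply seq_NoDup.
  - apply in_seq; lia.
  - rewrite Hk. simpl. apply taxon_eqb_refl.
  - intros u Hu Hl'. apply in_seq in Hu. apply is_leaf_of_spec in Hl'. apply U; auto; lia.
Qed.

Lemma msnc_prefix_sound k : (k <= nn psi)%nat ->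
  (forall px, In px (msnc_prefix k) -> 0 <= fst px /\ run_invariant k (snd px)) /\
  0 <= expect (msnc_prefix k) (state_balance k).
Proof.
  induction k as [|k IH]; intros Hk.
  - unfold msnc_prefix; simpl. split.
    + intros px [<-|[]]. split; [simpl; lra | apply run_invariant_init].
    + rewrite expect_dret. unfold state_balance; cbn [fst snd balance_opt].
      replace (sumR _) with 0; [lra|].
      generalize (pending_edges 0). induction l as [|e l IHl]; [reflexivity|].
      unfold sumR in *. cbn [map fold_right]. rewrite <- IHl. cbv [lineages_on balance_list].
      simpl. lra.
  - destruct (IH ltac:(lia)) as [IH1 IH2].
    replace (msnc_prefix (S k)) with (dbind (msnc_prefix k) (step psi lam gam k))
      by (unfold msnc_prefix; now rewrite seq_S, fold_left_app).
    split.
    + intros px Hp. apply in_dbind in Hp. destruct Hp as [p0 [q [H1 [H2 ->]]]].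
      destruct (IH1 p0 H1) as [W0 I0].
      destruct (proj1 (step_sound k (snd p0) ltac:(lia) I0) q H2). simpl.
      split; auto. apply Rmult_le_pos; auto.
    + rewrite expect_dbind. apply Rle_trans with (expect (msnc_prefix k) (state_balance k)); auto.
      apply expect_le. intros p0 H1. destruct (IH1 p0 H1) as [W0 I0]. split; auto.
      apply (step_sound k (snd p0) ltac:(lia) I0).
Qed.

Definition outgroup_of_state (g : taxon) (st : state) : R :=
  match snd st with Some T => outgroup_is g T | None => 0 end.

Lemma final_balance st : run_invariant (nn psi) st ->
  state_balance (nn psi) st = outgroup_of_state x st - outgroup_of_state z st.
Proof.
  destruct st as [b f]. intros [J1 _].
  assert (Hf : forall a, occ_opt a f = 1%nat).
  { intros a. specialize (J1 a). unfold taxon_count in J1; simpl in J1.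
    now rewrite pending_edges_end, leaves_from_end in J1. }
  destruct f as [T|]; [|specialize (Hf TA); discriminate].
  unfold state_balance, outgroup_of_state; simpl. rewrite pending_edges_end.
  rewrite (balance_complete_tree x y z T); auto. unfold sumR; simpl. lra.
Qed.

Lemma gene_tree_prob_expect g :
  gene_tree_prob psi lam gam g = expect (msnc_run psi lam gam) (outgroup_of_state g).
Proof.
  unfold gene_tree_prob, expect. f_equal. apply map_ext. intros [p [b f]].
  unfold outgroup_of_state, outgroup_is; simpl.
  destruct f as [t|]; [|lra]. destruct (outgroup t); [|lra]. destruct (taxon_eqb t0 g); lra.
Qed.

Lemma gene_tree_prob_nonparental_le : gene_tree_prob psi lam gam z <= gene_tree_prob psi lam gam x.
Proof.
  destruct (msnc_prefix_sound (nn psi) (le_n _)) as [Inv Nonneg].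
  rewrite !gene_tree_prob_expect. change (msnc_run psi lam gam) with (msnc_prefix (nn psi)).
  rewrite (expect_ext _ _ (fun st => outgroup_of_state x st - outgroup_of_state z st)) in Nonneg
    by (intros px Hp; apply final_balance, Inv, Hp).
  rewrite expect_sub in Nonneg. lra.
Qed.

End Balance_submartingale.

Lemma third_taxon (t g : taxon) : t <> g -> exists y, t <> y /\ y <> g.
Proof.
  intros D. destruct t, g; try congruence;
  [exists TC|exists TB|exists TC|exists TA|exists TB|exists TA]; split; discriminate.
Qed.

Theorem lemma1 :
  forall psi : network, wf_network psi ->
  forall lam gam : nat -> bool -> R,
    valid_lengths psi lam -> valid_gammas psi gam ->
    forall g : taxon, ~ anomalous psi lam gam g.
Proof.
  intros psi W lam gam VL VG g Ha.
  destruct (parental_exists psi W) as [t Pt].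
  destruct (classic (parental psi g)) as [Pg|NPg].
  - specialize (Ha g Pg). lra.
  - assert (D : t <> g) by (intros ->; contradiction).
    destruct (third_taxon t g D) as [y [D1 D2]].
    pose proof (gene_tree_prob_nonparental_le psi lam gam t y g W VL VG D1 D D2 NPg).
    specialize (Ha t Pt). lra.
Qed.
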